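(* There exist an open interval $(\theta^-,\theta^+)$ containing $0$ and a unique continuously differentiable function $\gamma:(\theta^-,\theta^+)\to\mathbb{R}$ with $\gamma(0)=0$ such that $f_{\mathrm{comp}}(\gamma(\theta),\theta)=0$ and $\mathbf{f}_{\mathrm{mv}}(\gamma(\theta),\theta)>\mathbf{0}$ (componentwise) for all $\theta\in(\theta^-,\theta^+)$. Moreover $\gamma$ is analytic and $$\gamma'(\theta)=\frac{|\mathbf{t}_1^r|}{|\mathbf{t}_4^r|}\,\frac{\mathbf{t}_2^d(\gamma(\theta))\cdot(\mathbf{t}_3^d(\theta)\times\mathbf{t}_4^r)}{\mathbf{t}_1^r\cdot(\mathbf{t}_2^d(\gamma(\theta))\times\mathbf{t}_3^d(\theta))}.$$
   Context: Fix $\mathbf{t}_1^r,\dots,\mathbf{t}_4^r\in\mathbb{R}^3$ with $\mathbf{t}_i^r\cdot(\mathbf{t}_j^r\times\mathbf{t}_k^r)\neq0$ for $ijk\in\{123,234,341,412\}$. For nonzero $\mathbf{t}\in\mathbb{R}^3$ and $\varphi\in\mathbb{R}$ let $\mathbf{R}_{\mathbf{t}}(\varphi):=|\mathbf{t}|^{-2}\mathbf{t}\otimes\mathbf{t}+\cos\varphi(\mathbf{I}-|\mathbf{t}|^{-2}\mathbf{t}\otimes\mathbf{t})+|\mathbf{t}|^{-1}\sin\varphi(\mathbf{t}\times)$ (counterclockwise rotation about $\mathbf{t}$ by $\varphi$), where $(\mathbf{a}\times)\mathbf{b}=\mathbf{a}\times\mathbf{b}$. Set $\mathbf{t}_1^d:=\mathbf{t}_1^r$,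 $\mathbf{t}_4^d:=\mathbf{t}_4^r$, $\mathbf{t}_2^d(\gamma):=\mathbf{R}_{\mathbf{t}_1^r}(\gamma)\mathbf{t}_2^r$, $\mathbf{t}_3^d(\theta):=\mathbf{R}_{\mathbf{t}_4^r}(\theta)\mathbf{t}_3^r$. Define $f_{\mathrm{comp}}(\gamma,\theta):=\mathbf{t}_2^d(\gamma)\cdot\mathbf{t}_3^d(\theta)-\mathbf{t}_2^r\cdot\mathbf{t}_3^r$ and $\mathbf{f}_{\mathrm{mv}}(\gamma,\theta)\in\mathbb{R}^4$ with components $[\mathbf{t}_1^d\cdot(\mathbf{t}_2^d(\gamma)\times\mathbf{t}_3^d(\theta))][\mathbf{t}_1^r\cdot(\mathbf{t}_2^r\times\mathbf{t}_3^r)]$, $[\mathbf{t}_2^d(\gamma)\cdot(\mathbf{t}_3^d(\theta)\times\mathbf{t}_4^d)][\mathbf{t}_2^r\cdot(\mathbf{t}_3^r\times\mathbf{t}_4^r)]$, $[\mathbf{t}_3^d(\theta)\cdot(\mathbf{t}_4^d\times\mathbf{t}_1^d)][\mathbf{t}_3^r\cdot(\mathbf{t}_4^r\times\mathbf{t}_1^r)]$, $[\mathbf{t}_4^d\cdot(\mathbf{t}_1^d\times\mathbf{t}_2^d(\gamma))][\mathbf{t}_4^r\cdot(\mathbf{t}_1^r\times\mathbf{t}_2^r)]$. *)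

From Stdlib Require Import Reals.
From Coquelicot Require Import Coquelicot.
Open Scope R_scope.

Definition vec3 : Type := (R * R * R)%type.
Definition vx (v : vec3) : R := fst (fst v).
Definition vy (v : vec3) : R := snd (fst v).
Definition vz (v : vec3) : R := snd v.
Definition mkv (a b c : R) : vec3 := (a, b, c).

Definition dot (u v : vec3) : R := vx u * vx v + vy u * vy v + vz u * vz v.
Definition cross (u v : vec3) : vec3 :=
  mkv (vy u * vz v - vz u * vy v)
      (vz u * vx v - vx u * vz v)
      (vx u * vy v - vy u * vx v).
Definition vadd (u v : vec3) : vec3 := mkv (vx u + vx v) (vy u + vy v) (vz u + vz v).
Definition vscal (a : R) (v : vec3) : vec3 := mkv (a * vx v) (a * vy v) (a * vz v).
Definition vnorm (v : vec3) : R := sqrt (dot v v).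
Definition triple (a b c : vec3) : R := dot a (cross b c).

Definition rot (t : vec3) (phi : R) (v : vec3) : vec3 :=
  let p := vscal (dot t v / (vnorm t ^ 2)) t in
  vadd p (vadd (vscal (cos phi) (vadd v (vscal (-1) p)))
               (vscal (sin phi / vnorm t) (cross t v))).

Section Config.
Variables t1 t2 t3 t4 : vec3.
Definition t2d (g : R) : vec3 := rot t1 g t2.
Definition t3d (th : R) : vec3 := rot t4 th t3.
Definition f_comp (g th : R) : R := dot (t2d g) (t3d th) - dot t2 t3.
(* the four components of f_mv (t1^d = t1, t4^d = t4) *)
Definition f_mv1 (g th : R) : R := triple t1 (t2d g) (t3d th) * triple t1 t2 t3.
Definition f_mv2 (g th : R) : R := triple (t2d g) (t3d th) t4 * triple t2 t3 t4.
Definition f_mv3 (g th : R) : R := triple (t3d th) t4 t1 * triple t3 t4 t1.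
Definition f_mv4 (g th : R) : R := triple t4 t1 (t2d g) * triple t4 t1 t2.
Definition f_mv_pos (g th : R) : Prop :=
  0 < f_mv1 g th /\ 0 < f_mv2 g th /\ 0 < f_mv3 g th /\ 0 < f_mv4 g th.
End Config.

Definition C1_on (f : R -> R) (a b : R) : Prop :=
  forall x, a < x < b -> ex_derive f x /\ continuous (Derive f) x.

Definition analytic_on (f : R -> R) (a b : R) : Prop :=
  forall x, a < x < b ->
    exists (c : nat -> R) (r : R), 0 < r /\
      forall y, Rabs (y - x) < r -> is_pseries c (y - x) (f y).

From Stdlib Require Import Reals Lra Lia Factorial.
From Coquelicot Require Import Coquelicot.
Open Scope R_scope.

(* Write f_comp(gamma, theta) = a(theta) + b(theta) cos gamma + c(theta) sin gamma. At the
   reference configuration a(0) + b(0) = 0 and c(0) = t1.(t2 x t3) / |t1| <> 0. The half-angle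
   substitution u = tan(gamma/2) turns the constraint into a quadratic equation in u, and its root
   -(a + b) / (c + s sqrt (c^2 - (a - b)(a + b))), with s the sign of c(0), vanishes at theta = 0;
   gamma = 2 atan u is the solution. Since f_mv(0, 0) has squares as components, f_mv stays
   positive along gamma near 0 by continuity.

   Analyticity goes through Cauchy estimates |f^(n)| <= M n! / rho^n near a point. They are stable
   under sums, products, antiderivatives and, by comparison with the rational majorants
   M rho / (rho + c - y), under composition; they hold for exp, sin, cos and 1/x, hence for ln,
   atan and sqrt; and Taylor's formula with Lagrange remainder turns them into convergent power
   series.

   Uniqueness: the gamma-derivative -b sin gamma + c cos gamma of f_comp stays away from 0 near
   (0, 0), so f_comp(., theta) has at most one zero in a band |gamma| < eta, and a continuous
   solution through 0 cannot leave that band. The formula for gamma' is implicit differentiation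
   of f_comp(gamma(theta), theta) = 0. *)

Lemma Derive_n_S (f : R -> R) n x : Derive_n f (S n) x = Derive_n (Derive f) n x.
Proof. replace (S n) with (n + 1)%nat by lia. now rewrite <- Derive_n_comp. Qed.

Lemma ex_derive_n_S f n x :
  ex_derive f x -> ex_derive_n (Derive f) n x -> ex_derive_n f (S n) x.
Proof.
  intros Hf HDf. destruct n as [|n]; [exact Hf|].
  simpl in HDf |- *. eapply ex_derive_ext; [|exact HDf].
  intros t. now rewrite <- (Derive_n_S f n t).
Qed.

Lemma ex_derive_n_Derive f n x : ex_derive_n f (S n) x -> ex_derive_n (Derive f) n x.
Proof.
  intros Hf. destruct n as [|n]; [exact I|].
  simpl in Hf |- *. eapply ex_derive_ext; [|exact Hf].
  intros t. now rewrite <- (Derive_n_S f n t).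
Qed.

Lemma open_locally (U P : R -> Prop) x :
  open U -> U x -> (forall y, U y -> P y) -> locally x P.
Proof. intros HU Hx H. apply (filter_imp U); auto. Qed.

Definition ex_derive_upto (V : R -> Prop) n f :=
  forall k x, (k <= n)%nat -> V x -> ex_derive_n f k x.

Lemma ex_derive_upto_pred V n f : ex_derive_upto V (S n) f -> ex_derive_upto V n f.
Proof. intros H k x Hk Hx. apply H; auto. Qed.

Lemma ex_derive_upto_Derive V n f : ex_derive_upto V (S n) f -> ex_derive_upto V n (Derive f).
Proof. intros H k x Hk Hx. apply ex_derive_n_Derive, H; auto; lia. Qed.

Lemma ex_derive_upto_ex_derive V n f x : ex_derive_upto V (S n) f -> V x -> ex_derive f x.
Proof. intros H Hx. exact (H 1%nat x ltac:(lia) Hx). Qed.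

Lemma ex_derive_upto_locally U n f x : open U -> U x -> ex_derive_upto U n f ->
  locally x (fun y => forall k, (k <= n)%nat -> ex_derive_n f k y).
Proof. intros HU Hx H. apply (open_locally U); auto. Qed.

Section Smoothness.
Variable U : R -> Prop.
Hypothesis U_open : open U.

Lemma ex_derive_upto_mult n : forall u v,
  ex_derive_upto U n u -> ex_derive_upto U n v -> ex_derive_upto U n (fun t => u t * v t).
Proof.
  induction n as [|n IH]; intros u v Hu Hv k x Hk Hx.
  - replace k with 0%nat by lia. exact I.
  - destruct (Compare_dec.le_lt_dec k n) as [Hkn|Hkn].
    { apply IH; auto; apply ex_derive_upto_pred; auto. }
    replace k with (S n) by lia. apply ex_derive_n_S.
    { apply ex_derive_mult; eapply ex_derive_upto_ex_derive; eauto. }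
    apply (ex_derive_n_ext_loc (fun t => Derive u t * v t + u t * Derive v t)).
    { apply (open_locally U); auto. intros y Hy.
      rewrite Derive_mult; auto; eapply ex_derive_upto_ex_derive; eauto. }
    apply ex_derive_n_plus; apply (ex_derive_upto_locally U); auto; apply IH.
    + apply ex_derive_upto_Derive; auto.
    + apply ex_derive_upto_pred; auto.
    + apply ex_derive_upto_pred; auto.
    + apply ex_derive_upto_Derive; auto.
Qed.

Lemma Derive_n_S_mult n p q x : U x ->
  ex_derive_upto U (S n) p -> ex_derive_upto U (S n) q ->
  Derive_n (fun t => p t * q t) (S n) x =
  Derive_n (fun t => Derive p t * q t) n x + Derive_n (fun t => p t * Derive q t) n x.
Proof.
  intros Hx Hp Hq. rewrite Derive_n_S.
  rewrite (Derive_n_ext_loc _ (fun t => Derive p t * q t + p t * Derive q t)).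
  - apply Derive_n_plus; apply (ex_derive_upto_locally U); auto; apply ex_derive_upto_mult.
    + apply ex_derive_upto_Derive; auto.
    + apply ex_derive_upto_pred; auto.
    + apply ex_derive_upto_pred; auto.
    + apply ex_derive_upto_Derive; auto.
  - apply (open_locally U); auto. intros y Hy.
    apply Derive_mult; eapply ex_derive_upto_ex_derive; eauto.
Qed.

Variables (V : R -> Prop) (g : R -> R).
Hypothesis g_maps : forall x, U x -> V (g x).

Lemma ex_derive_upto_comp n : forall f,
  ex_derive_upto V n f -> ex_derive_upto U n g -> ex_derive_upto U n (fun t => f (g t)).
Proof.
  induction n as [|n IH]; intros f Hf Hg k x Hk Hx.
  - replace k with 0%nat by lia. exact I.
  - destruct (Compare_dec.le_lt_dec k n) as [Hkn|Hkn].
    { apply IH; auto; apply ex_derive_upto_pred; auto. }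
    replace k with (S n) by lia. apply ex_derive_n_S.
    { apply ex_derive_comp; eapply ex_derive_upto_ex_derive; eauto. }
    apply (ex_derive_n_ext_loc (fun t => Derive g t * Derive f (g t))).
    { apply (open_locally U); auto. intros y Hy.
      rewrite (Derive_comp f g y); auto; eapply ex_derive_upto_ex_derive; eauto. }
    apply (ex_derive_upto_mult n); try lia; auto.
    + apply ex_derive_upto_Derive; auto.
    + apply IH; [apply ex_derive_upto_Derive | apply ex_derive_upto_pred]; auto.
Qed.

Lemma Derive_n_S_comp n f x : U x ->
  ex_derive_upto V (S n) f -> ex_derive_upto U (S n) g ->
  Derive_n (fun t => f (g t)) (S n) x = Derive_n (fun t => Derive g t * Derive f (g t)) n x.
Proof.
  intros Hx Hf Hg. rewrite Derive_n_S. apply Derive_n_ext_loc.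
  apply (open_locally U); auto. intros y Hy.
  apply (Derive_comp f g y); eapply ex_derive_upto_ex_derive; eauto.
Qed.

End Smoothness.

Section Majorants.
Variables U W : R -> Prop.
Hypotheses (U_open : open U) (W_open : open W).
Variable z : R.
Hypothesis Wz : W z.

Definition majorant_upto n p P :=
  forall k x, (k <= n)%nat -> U x -> Rabs (Derive_n p k x) <= Derive_n P k z.

Lemma majorant_upto_mult n : forall p q P Q,
  ex_derive_upto U n p -> ex_derive_upto U n q ->
  ex_derive_upto W n P -> ex_derive_upto W n Q ->
  majorant_upto n p P -> majorant_upto n q Q ->
  majorant_upto n (fun t => p t * q t) (fun t => P t * Q t).
Proof.
  induction n as [|n IH]; intros p q P Q Hp Hq HP HQ Mp Mq k x Hk Hx.
  { replace k with 0%nat by lia. simpl. rewrite Rabs_mult.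
    apply Rmult_le_compat; try apply Rabs_pos; [apply (Mp 0%nat x) | apply (Mq 0%nat x)]; auto. }
  destruct k as [|m].
  { simpl. rewrite Rabs_mult.
    apply Rmult_le_compat; try apply Rabs_pos; [apply (Mp 0%nat x) | apply (Mq 0%nat x)]; auto; lia. }
  assert (Hm : (m <= n)%nat) by lia.
  rewrite (Derive_n_S_mult U U_open m p q x); auto;
    try (intros i y Hi Hy; apply Hp || apply Hq; auto; lia).
  rewrite (Derive_n_S_mult W W_open m P Q z); auto;
    try (intros i y Hi Hy; apply HP || apply HQ; auto; lia).
  eapply Rle_trans; [apply Rabs_triang | apply Rplus_le_compat].
  - apply (IH (Derive p) q (Derive P) Q).
    + apply ex_derive_upto_Derive; auto.
    + apply ex_derive_upto_pred; auto.
    + apply ex_derive_upto_Derive; auto.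
    + apply ex_derive_upto_pred; auto.
    + intros i y Hi Hy. rewrite <- !Derive_n_S. apply Mp; auto; lia.
    + intros i y Hi Hy. apply Mq; auto; lia.
    + exact Hm.
    + exact Hx.
  - apply (IH p (Derive q) P (Derive Q)).
    + apply ex_derive_upto_pred; auto.
    + apply ex_derive_upto_Derive; auto.
    + apply ex_derive_upto_pred; auto.
    + apply ex_derive_upto_Derive; auto.
    + intros i y Hi Hy. apply Mp; auto; lia.
    + intros i y Hi Hy. rewrite <- !Derive_n_S. apply Mq; auto; lia.
    + exact Hm.
    + exact Hx.
Qed.

Variables (V V' : R -> Prop) (g G : R -> R).
Hypotheses (g_maps : forall x, U x -> V (g x)) (G_maps : forall x, W x -> V' (G x)).

(* The chain rule writes (f o g)^(n+1) as a product of derivatives of g and of f o g, so that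
   domination propagates by induction through [majorant_upto_mult]. *)
Lemma majorant_upto_comp n : forall f F,
  ex_derive_upto V n f -> ex_derive_upto V' n F ->
  ex_derive_upto U n g -> ex_derive_upto W n G ->
  (forall k y, (k <= n)%nat -> V y -> Rabs (Derive_n f k y) <= Derive_n F k (G z)) ->
  (forall k x, (1 <= k <= n)%nat -> U x -> Rabs (Derive_n g k x) <= Derive_n G k z) ->
  majorant_upto n (fun t => f (g t)) (fun t => F (G t)).
Proof.
  induction n as [|n IH]; intros f F Hf HF Hg HG Bf Bg k x Hk Hx.
  { replace k with 0%nat by lia. apply (Bf 0%nat); auto. }
  destruct k as [|m].
  { apply (Bf 0%nat); auto; lia. }
  rewrite (Derive_n_S_comp U U_open V g g_maps m f x); auto;
    try (intros i y Hi Hy; apply Hf || apply Hg; auto; lia).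
  rewrite (Derive_n_S_comp W W_open V' G G_maps m F z); auto;
    try (intros i y Hi Hy; apply HF || apply HG; auto; lia).
  apply (majorant_upto_mult n (Derive g) (fun t => Derive f (g t))
                                (Derive G) (fun t => Derive F (G t))); auto; try lia.
  - apply ex_derive_upto_Derive; auto.
  - apply (ex_derive_upto_comp U U_open V g g_maps n (Derive f));
      [apply ex_derive_upto_Derive | apply ex_derive_upto_pred]; auto.
  - apply ex_derive_upto_Derive; auto.
  - apply (ex_derive_upto_comp W W_open V' G G_maps n (Derive F));
      [apply ex_derive_upto_Derive | apply ex_derive_upto_pred]; auto.
  - intros i y Hi Hy. rewrite <- !Derive_n_S. apply Bg; auto; lia.
  - apply IH.
    + apply ex_derive_upto_Derive; auto.
    + apply ex_derive_upto_Derive; auto.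
    + apply ex_derive_upto_pred; auto.
    + apply ex_derive_upto_pred; auto.
    + intros i y Hi Hy. rewrite <- !Derive_n_S. apply Bf; auto; lia.
    + intros i y Hi Hy. apply Bg; auto; lia.
Qed.

End Majorants.

Lemma fact_pos n : 0 < INR (fact n).
Proof. apply INR_fact_lt_0. Qed.

Definition rball (x0 r y : R) : Prop := Rabs (y - x0) < r.

Lemma open_rball x0 r : open (rball x0 r).
Proof.
  intros y Hy. unfold rball in *. assert (Hp : 0 < r - Rabs (y - x0)) by lra.
  exists (mkposreal _ Hp). intros t Ht. unfold ball in Ht; simpl in Ht.
  unfold AbsRing_ball, abs, minus, plus, opp in Ht; simpl in Ht.
  replace (t - x0) with ((t - y) + (y - x0)) by ring.
  eapply Rle_lt_trans; [apply Rabs_triang | unfold Rminus at 1; lra].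
Qed.

Lemma locally_affine_neq0 D E h : D - E * h <> 0 -> locally h (fun t => D - E * t <> 0).
Proof.
  intros H. assert (Hp : 0 < Rabs (D - E * h) / (Rabs E + 1)).
  { apply Rdiv_lt_0_compat; [apply Rabs_pos_lt; auto | pose proof (Rabs_pos E); lra]. }
  apply (open_locally (rball h (Rabs (D - E * h) / (Rabs E + 1)))).
  { apply open_rball. }
  { unfold rball. rewrite Rminus_diag, Rabs_R0. exact Hp. }
  intros t Ht Hc. unfold rball in Ht.
  assert (Habs : Rabs (D - E * h) = Rabs E * Rabs (t - h))
    by (rewrite <- Rabs_mult; f_equal; lra).
  assert (Rabs (t - h) * (Rabs E + 1) < Rabs (D - E * h)).
  { pose proof (Rabs_pos E). apply (Rmult_lt_compat_r (Rabs E + 1)) in Ht; [|lra].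
    unfold Rdiv in Ht. rewrite Rmult_assoc, Rinv_l, Rmult_1_r in Ht; lra. }
  pose proof (Rabs_pos (t - h)). pose proof (Rabs_pos E). nra.
Qed.

Lemma is_derive_div_affine_pow K D E h n : D - E * h <> 0 ->
  is_derive (fun t => K / (D - E * t) ^ (S n)) h (K * INR (S n) * E / (D - E * h) ^ (S (S n))).
Proof.
  intros H. auto_derive.
  - apply Rmult_integral_contrapositive_currified; [lra | apply pow_nonzero; lra].
  - change (match n with 0%nat => 1 | S _ => INR n + 1 end) with (INR (S n)).
    simpl. replace (D + - (E * h)) with (D - E * h) by ring.
    assert (HP : (D - E * h) ^ n <> 0) by (apply pow_nonzero; lra).
    set (P := (D - E * h) ^ n) in *.
    set (m := match n with 0%nat => 1 | S _ => INR n + 1 end).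
    field. split; auto.
Qed.

Lemma Derive_n_div_affine b D E : forall n h, D - E * h <> 0 ->
  ex_derive_n (fun t => b / (D - E * t)) n h /\
  Derive_n (fun t => b / (D - E * t)) n h = b * INR (fact n) * E ^ n / (D - E * h) ^ (S n).
Proof.
  induction n as [|n IH]; intros h Hh.
  { split; [exact I | simpl; field; lra]. }
  assert (Hloc : locally h (fun t => b * INR (fact n) * E ^ n / (D - E * t) ^ (S n)
                                     = Derive_n (fun t => b / (D - E * t)) n t)).
  { apply (filter_imp (fun t => D - E * t <> 0)).
    - intros t Ht. symmetry. apply IH; auto.
    - apply locally_affine_neq0; auto. }
  pose proof (is_derive_div_affine_pow (b * INR (fact n) * E ^ n) D E h n Hh) as Hd.
  split.
  - simpl. eapply ex_derive_ext_loc; [exact Hloc | eexists; exact Hd].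
  - change (Derive (Derive_n (fun t => b / (D - E * t)) n) h
            = b * INR (fact (S n)) * E ^ (S n) / (D - E * h) ^ (S (S n))).
    rewrite <- (Derive_ext_loc _ _ _ Hloc).
    etransitivity; [exact (is_derive_unique _ _ _ Hd)|].
    rewrite fact_simpl, mult_INR. simpl.
    assert (HP : (D - E * h) ^ n <> 0) by (apply pow_nonzero; lra).
    set (P := (D - E * h) ^ n) in *. set (Q := E ^ n). set (m := INR (fact n)).
    set (m2 := match n with 0%nat => 1 | S _ => INR n + 1 end).
    field. split; auto.
Qed.

Definition cauchy_bound (f : R -> R) (x0 r rho M : R) : Prop :=
  forall n y, Rabs (y - x0) < r ->
    ex_derive_n f n y /\ Rabs (Derive_n f n y) <= M * INR (fact n) / rho ^ n.

Definition cauchy_bounded (f : R -> R) (x0 : R) : Prop :=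
  exists r rho M, 0 < r /\ 0 < rho /\ 0 < M /\ cauchy_bound f x0 r rho M.

Lemma cauchy_bound_lipschitz g x0 r rho N x : 0 < rho ->
  cauchy_bound g x0 r rho N -> Rabs (x - x0) < r ->
  Rabs (g x - g x0) <= N / rho * Rabs (x - x0).
Proof.
  intros Hrho Hg Hx. apply (bounded_variation g (Derive g)).
  intros t Ht. destruct (Hg 1%nat t ltac:(lra)) as [H1 H2].
  split; [apply Derive_correct, H1 |].
  eapply Rle_trans; [exact H2 | simpl; right; field; lra].
Qed.

Lemma cauchy_bound_maps_ball g x0 r2 rho2 N r1 x : 0 < rho2 -> 0 < N -> 0 < r1 ->
  cauchy_bound g x0 r2 rho2 N -> Rabs (x - x0) < Rmin r2 (r1 * rho2 / (N + 1)) ->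
  Rabs (g x - g x0) < r1.
Proof.
  intros Hrho2 HN Hr1 Hg Hx.
  pose proof (Rmin_l r2 (r1 * rho2 / (N + 1))). pose proof (Rmin_r r2 (r1 * rho2 / (N + 1))).
  pose proof (cauchy_bound_lipschitz g x0 r2 rho2 N x Hrho2 Hg ltac:(lra)).
  assert (N / rho2 * Rabs (x - x0) < r1); [|lra].
  apply (Rmult_lt_reg_l (rho2 / N)); [apply Rdiv_lt_0_compat; lra|].
  replace (rho2 / N * (N / rho2 * Rabs (x - x0))) with (Rabs (x - x0)) by (field; lra).
  apply (Rlt_le_trans _ (r1 * rho2 / (N + 1))); [lra|].
  replace (rho2 / N * r1) with (r1 * rho2 * / N) by (field; lra).
  unfold Rdiv. apply Rmult_le_compat_l; [nra | apply Rinv_le_contravar; lra].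
Qed.

(* The extremal function for a Cauchy bound: its n-th derivative at [c] is exactly
   [M * n! / rho ^ n]. *)
Definition cauchy_majorant (M rho c y : R) : R := M * rho / (rho + c - y).

Lemma Derive_n_cauchy_majorant M rho c n y : rho + c - y <> 0 ->
  ex_derive_n (cauchy_majorant M rho c) n y /\
  Derive_n (cauchy_majorant M rho c) n y = M * rho * INR (fact n) / (rho + c - y) ^ (S n).
Proof.
  intros Hy. assert (Heq : forall t, M * rho / (rho + c - 1 * t) = cauchy_majorant M rho c t)
    by (intros t; unfold cauchy_majorant; now rewrite Rmult_1_l).
  destruct (Derive_n_div_affine (M * rho) (rho + c) 1 n y ltac:(lra)) as [Hex HD].
  split; [eapply ex_derive_n_ext; [exact Heq | exact Hex]|].
  rewrite <- (Derive_n_ext _ _ n y Heq), HD, pow1. f_equal; [ring | f_equal; ring].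
Qed.

Lemma Derive_n_cauchy_majorant_center M rho c n : 0 < rho ->
  Derive_n (cauchy_majorant M rho c) n c = M * INR (fact n) / rho ^ n.
Proof.
  intros Hrho. rewrite (proj2 (Derive_n_cauchy_majorant M rho c n c ltac:(lra))).
  replace (rho + c - c) with rho by ring. simpl. field. split; [apply pow_nonzero|]; lra.
Qed.

Lemma cauchy_majorant_comp M rho1 N rho2 h :
  0 < rho1 -> 0 < rho2 -> 0 < N -> rho2 - h <> 0 -> rho1 * rho2 - (rho1 + N) * h <> 0 ->
  cauchy_majorant M rho1 N (cauchy_majorant N rho2 0 h)
  = M * rho1 / (rho1 + N) + M * rho1 * rho2 * N / (rho1 + N) / (rho1 * rho2 - (rho1 + N) * h).
Proof. intros. unfold cauchy_majorant. field. repeat split; lra. Qed.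

Lemma affine_small_neq0 D E h : 0 < D -> 0 < E -> Rabs h < D / (2 * E) -> D - E * h <> 0.
Proof.
  intros HD HE H. assert (Rabs (E * h) < D / 2); [|apply Rabs_def2 in H0; lra].
  rewrite Rabs_mult, Rabs_right by lra. apply (Rmult_lt_compat_l E) in H; auto.
  replace (E * (D / (2 * E))) with (D / 2) in H by (field; lra). lra.
Qed.

Lemma cauchy_majorant_maps_ball N rho1 rho2 h : 0 < rho1 -> 0 < rho2 -> 0 < N ->
  Rabs h < rho2 / 2 -> Rabs h < rho1 * rho2 / (2 * (rho1 + N)) ->
  Rabs (cauchy_majorant N rho2 0 h - N) < rho1.
Proof.
  intros Hrho1 Hrho2 HN H1 H2. pose proof (Rabs_def2 _ _ H1) as [H3 H4].
  unfold cauchy_majorant.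
  replace (N * rho2 / (rho2 + 0 - h) - N) with (N * h / (rho2 - h)) by (field; lra).
  unfold Rdiv. rewrite !Rabs_mult, Rabs_inv, (Rabs_right N), (Rabs_right (rho2 - h)) by lra.
  apply (Rmult_lt_reg_r (rho2 - h)); [lra|]. rewrite Rmult_assoc, Rinv_l, Rmult_1_r by lra.
  assert (Rabs h * (rho1 + N) < rho1 * rho2 / 2).
  { apply (Rmult_lt_compat_r (rho1 + N)) in H2; [|lra].
    replace (rho1 * rho2 / (2 * (rho1 + N)) * (rho1 + N)) with (rho1 * rho2 / 2) in H2
      by (field; lra). lra. }
  pose proof (Rabs_pos h). nra.
Qed.

Lemma Derive_n_const_plus_div_affine_le a b D E n : 0 < a -> 0 < b -> 0 < D -> 0 < E ->
  Derive_n (fun h => a + b / (D - E * h)) n 0 <= (a + b / D) * INR (fact n) / (D / E) ^ n.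
Proof.
  intros Ha Hb HD HE. assert (HD0 : D - E * 0 <> 0) by lra.
  rewrite Derive_n_plus.
  2: { apply filter_forall. intros y k _. apply ex_derive_n_const. }
  2: { apply (filter_imp (fun t => D - E * t <> 0)); [|apply locally_affine_neq0; auto].
       intros t Ht k _. apply Derive_n_div_affine; auto. }
  rewrite (proj2 (Derive_n_div_affine b D E n 0 HD0)), Rmult_0_r, Rminus_0_r.
  assert (Hbn : b * INR (fact n) * E ^ n / D ^ S n = b / D * INR (fact n) / (D / E) ^ n).
  { assert (D ^ n <> 0) by (apply pow_nonzero; lra).
    assert (E ^ n <> 0) by (apply pow_nonzero; lra).
    unfold Rdiv. rewrite Rpow_mult_distr, pow_inv. simpl. field. repeat split; auto; lra. }
  rewrite Hbn. pose proof (fact_pos n).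
  assert (0 < (D / E) ^ n) by (apply pow_lt, Rdiv_lt_0_compat; lra).
  assert (0 <= a * INR (fact n) / (D / E) ^ n)
    by (apply Rlt_le, Rdiv_lt_0_compat; [nra | lra]).
  destruct n as [|n].
  - simpl in *. lra.
  - rewrite Derive_n_const. unfold Rdiv in *. nra.
Qed.

Section Composition.
Variables (f g : R -> R) (x0 r1 rho1 M r2 rho2 N : R).
Hypotheses (Hr1 : 0 < r1) (Hrho1 : 0 < rho1) (HM : 0 < M)
  (Hr2 : 0 < r2) (Hrho2 : 0 < rho2) (HN : 0 < N).
Hypotheses (Hg : cauchy_bound g x0 r2 rho2 N) (Hf : cauchy_bound f (g x0) r1 rho1 M).

Definition comp_radius := Rmin r2 (r1 * rho2 / (N + 1)).
Definition majorant_radius := Rmin (rho2 / 2) (rho1 * rho2 / (2 * (rho1 + N))).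

Lemma comp_radius_pos : 0 < comp_radius.
Proof. apply Rmin_pos; [|apply Rdiv_lt_0_compat]; nra. Qed.

Lemma majorant_radius_pos : 0 < majorant_radius.
Proof. apply Rmin_pos; [|apply Rdiv_lt_0_compat]; nra. Qed.

Lemma rball_comp_radius x : rball x0 comp_radius x -> Rabs (x - x0) < r2.
Proof. intros Hx. eapply Rlt_le_trans; [exact Hx | apply Rmin_l]. Qed.

Lemma rball_majorant_radius h : rball 0 majorant_radius h ->
  rho2 + 0 - h <> 0 /\ rho1 * rho2 - (rho1 + N) * h <> 0 /\
  Rabs (cauchy_majorant N rho2 0 h - N) < rho1.
Proof.
  intros Hh. unfold rball in Hh. rewrite Rminus_0_r in Hh.
  assert (H1 : Rabs h < rho2 / 2) by (eapply Rlt_le_trans; [exact Hh | apply Rmin_l]).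
  assert (H2 : Rabs h < rho1 * rho2 / (2 * (rho1 + N)))
    by (eapply Rlt_le_trans; [exact Hh | apply Rmin_r]).
  split; [apply Rabs_def2 in H1; lra|].
  split; [apply affine_small_neq0; auto; nra|].
  apply cauchy_majorant_maps_ball; auto.
Qed.

Lemma comp_Derive_n_le_majorant n y : rball x0 comp_radius y ->
  Rabs (Derive_n (fun t => f (g t)) n y)
  <= Derive_n (fun t => cauchy_majorant M rho1 N (cauchy_majorant N rho2 0 t)) n 0.
Proof.
  intros Hy.
  assert (H0 : rball 0 majorant_radius 0).
  { unfold rball. rewrite Rminus_diag, Rabs_R0. apply majorant_radius_pos. }
  apply (majorant_upto_comp (rball x0 comp_radius) (rball 0 majorant_radius)
           (open_rball _ _) (open_rball _ _) 0 H0 (rball (g x0) r1) (rball N rho1)) with n;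
    auto.
  - intros x Hx. apply (cauchy_bound_maps_ball g x0 r2 rho2 N r1); auto.
  - intros h Hh. apply rball_majorant_radius, Hh.
  - intros k z _ Hz. apply Hf, Hz.
  - intros k z _ Hz. apply Derive_n_cauchy_majorant. apply Rabs_def2 in Hz. lra.
  - intros k x _ Hx. apply Hg, rball_comp_radius, Hx.
  - intros k h _ Hh. apply Derive_n_cauchy_majorant, rball_majorant_radius, Hh.
  - intros k z _ Hz. unfold cauchy_majorant at 2.
    replace (N * rho2 / (rho2 + 0 - 0)) with N by (field; lra).
    rewrite Derive_n_cauchy_majorant_center by lra. apply Hf, Hz.
  - intros k x _ Hx. rewrite Derive_n_cauchy_majorant_center by lra.
    apply Hg, rball_comp_radius, Hx.
Qed.

Lemma Derive_n_majorant_comp_le n :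
  Derive_n (fun t => cauchy_majorant M rho1 N (cauchy_majorant N rho2 0 t)) n 0
  <= (M * rho1 / (rho1 + N) + M * rho1 * rho2 * N / (rho1 + N) / (rho1 * rho2))
     * INR (fact n) / (rho1 * rho2 / (rho1 + N)) ^ n.
Proof.
  rewrite (Derive_n_ext_loc _ (fun h => M * rho1 / (rho1 + N)
             + M * rho1 * rho2 * N / (rho1 + N) / (rho1 * rho2 - (rho1 + N) * h))).
  - apply Derive_n_const_plus_div_affine_le; try nra.
    + apply Rdiv_lt_0_compat; nra.
    + repeat apply Rdiv_lt_0_compat; try nra. repeat apply Rmult_lt_0_compat; lra.
  - apply (open_locally (rball 0 majorant_radius)); [apply open_rball | |].
    + unfold rball. rewrite Rminus_diag, Rabs_R0. apply majorant_radius_pos.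
    + intros h Hh. destruct (rball_majorant_radius h Hh) as [Hd1 [Hd2 _]].
      apply cauchy_majorant_comp; auto; lra.
Qed.

End Composition.

Lemma cauchy_bounded_comp f g x0 :
  cauchy_bounded g x0 -> cauchy_bounded f (g x0) -> cauchy_bounded (fun t => f (g t)) x0.
Proof.
  intros [r2 [rho2 [N [Hr2 [Hrho2 [HN Hg]]]]]] [r1 [rho1 [M [Hr1 [Hrho1 [HM Hf]]]]]].
  set (r := comp_radius r1 r2 rho2 N).
  exists r, (rho1 * rho2 / (rho1 + N)),
    (M * rho1 / (rho1 + N) + M * rho1 * rho2 * N / (rho1 + N) / (rho1 * rho2)).
  split; [apply comp_radius_pos; auto|].
  split; [apply Rdiv_lt_0_compat; nra|].
  split.
  { assert (0 < M * rho1 / (rho1 + N)) by (apply Rdiv_lt_0_compat; nra).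
    assert (0 < M * rho1 * rho2 * N / (rho1 + N) / (rho1 * rho2)); [|lra].
    repeat apply Rdiv_lt_0_compat; try nra. repeat apply Rmult_lt_0_compat; lra. }
  intros n y Hy. split.
  - apply (ex_derive_upto_comp (rball x0 r) (open_rball _ _) (rball (g x0) r1) g) with n.
    + intros x Hx. apply (cauchy_bound_maps_ball g x0 r2 rho2 N r1); auto.
    + intros k z _ Hz. apply Hf, Hz.
    + intros k z _ Hz. apply Hg, (rball_comp_radius x0 r1 r2 rho2 N), Hz.
    + lia.
    + exact Hy.
  - eapply Rle_trans; [apply (comp_Derive_n_le_majorant f g x0 r1 rho1 M r2 rho2 N); auto|].
    apply Derive_n_majorant_comp_le; auto.
Qed.

Lemma cauchy_bound_mono f x0 r rho M r' rho' M' :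
  0 < rho' -> 0 <= M -> r' <= r -> rho' <= rho -> M <= M' ->
  cauchy_bound f x0 r rho M -> cauchy_bound f x0 r' rho' M'.
Proof.
  intros Hrho' HM Hr Hrho HMM H n y Hy. destruct (H n y ltac:(lra)) as [Hex Hb].
  split; [exact Hex|]. eapply Rle_trans; [exact Hb|]. unfold Rdiv.
  pose proof (fact_pos n).
  apply Rmult_le_compat; [nra | apply Rlt_le, Rinv_0_lt_compat, pow_lt; lra | nra |].
  apply Rinv_le_contravar; [apply pow_lt; lra | apply pow_incr; lra].
Qed.

Lemma cauchy_bounded_ext_loc f g x0 r : 0 < r ->
  (forall y, Rabs (y - x0) < r -> f y = g y) -> cauchy_bounded g x0 -> cauchy_bounded f x0.
Proof.
  intros Hr Heq [r1 [rho [M [Hr1 [Hrho [HM H]]]]]].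
  exists (Rmin r r1), rho, M. split; [apply Rmin_pos; auto|]. split; [auto|]. split; [auto|].
  intros n y Hy.
  assert (Hy1 : Rabs (y - x0) < r1) by (eapply Rlt_le_trans; [exact Hy | apply Rmin_r]).
  assert (Hloc : locally y (fun t => f t = g t)).
  { apply (open_locally (rball x0 r)); [apply open_rball | | exact Heq].
    eapply Rlt_le_trans; [exact Hy | apply Rmin_l]. }
  split.
  - apply (ex_derive_n_ext_loc g); [|apply H; auto].
    apply (filter_imp _ _ (fun t Ht => eq_sym Ht) Hloc).
  - rewrite (Derive_n_ext_loc f g); [apply H; auto | exact Hloc].
Qed.

Lemma cauchy_bounded_ext f g x0 : (forall y, f y = g y) -> cauchy_bounded g x0 -> cauchy_bounded f x0.
Proof. intros H. apply (cauchy_bounded_ext_loc f g x0 1); [lra | auto]. Qed.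

Lemma cauchy_bounded_plus f g x0 :
  cauchy_bounded f x0 -> cauchy_bounded g x0 -> cauchy_bounded (fun t => f t + g t) x0.
Proof.
  intros [r1 [rho1 [M1 [Hr1 [Hrho1 [HM1 H1]]]]]] [r2 [rho2 [M2 [Hr2 [Hrho2 [HM2 H2]]]]]].
  set (r := Rmin r1 r2). set (rho := Rmin rho1 rho2).
  assert (Hr : 0 < r) by (apply Rmin_pos; auto).
  assert (Hrho : 0 < rho) by (apply Rmin_pos; auto).
  apply (cauchy_bound_mono f x0 r1 rho1 M1 r rho M1) in H1;
    [| lra | lra | apply Rmin_l | apply Rmin_l | lra].
  apply (cauchy_bound_mono g x0 r2 rho2 M2 r rho M2) in H2;
    [| lra | lra | apply Rmin_r | apply Rmin_r | lra].
  exists r, rho, (M1 + M2). split; [exact Hr|]. split; [exact Hrho|]. split; [lra|].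
  intros n y Hy.
  assert (L : forall h M, cauchy_bound h x0 r rho M ->
                locally y (fun t => forall k, (k <= n)%nat -> ex_derive_n h k t)).
  { intros h M Hh. apply (open_locally (rball x0 r)); [apply open_rball | exact Hy |].
    intros t Ht k _. apply Hh, Ht. }
  split; [apply ex_derive_n_plus; [apply (L _ _ H1) | apply (L _ _ H2)]|].
  rewrite Derive_n_plus by (apply (L _ _ H1) || apply (L _ _ H2)).
  eapply Rle_trans; [apply Rabs_triang|].
  replace ((M1 + M2) * INR (fact n) / rho ^ n)
    with (M1 * INR (fact n) / rho ^ n + M2 * INR (fact n) / rho ^ n)
    by (field; apply pow_nonzero; lra).
  apply Rplus_le_compat; [apply H1 | apply H2]; auto.
Qed.

Lemma cauchy_bounded_scal c f x0 : cauchy_bounded f x0 -> cauchy_bounded (fun t => c * f t) x0.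
Proof.
  intros [r [rho [M [Hr [Hrho [HM H]]]]]].
  exists r, rho, ((Rabs c + 1) * M). pose proof (Rabs_pos c).
  split; [auto|]. split; [auto|]. split; [nra|].
  intros n y Hy. split; [apply ex_derive_n_scal_l, H; auto|].
  rewrite Derive_n_scal_l, Rabs_mult.
  assert (0 <= M * INR (fact n) / rho ^ n).
  { pose proof (fact_pos n).
    apply Rmult_le_pos; [nra | apply Rlt_le, Rinv_0_lt_compat, pow_lt; lra]. }
  apply (Rle_trans _ (Rabs c * (M * INR (fact n) / rho ^ n))).
  - apply Rmult_le_compat_l; [apply Rabs_pos | apply H; auto].
  - replace ((Rabs c + 1) * M * INR (fact n) / rho ^ n)
      with ((Rabs c + 1) * (M * INR (fact n) / rho ^ n)) by (field; apply pow_nonzero; lra).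
    nra.
Qed.

Lemma cauchy_bounded_pow p x0 : cauchy_bounded (fun t => t ^ p) x0.
Proof.
  set (a := Rabs x0 + 1).
  assert (Ha : 1 <= a) by (unfold a; pose proof (Rabs_pos x0); lra).
  assert (0 < a ^ p) by (apply pow_lt; lra). pose proof (fact_pos p).
  exists 1, 1, (INR (fact p) * a ^ p). split; [lra|]. split; [lra|]. split; [nra|].
  intros n y Hy. split; [apply ex_derive_n_pow|].
  rewrite Derive_n_pow, pow1, Rdiv_1_r.
  assert (Hya : Rabs y <= a).
  { unfold a. replace y with ((y - x0) + x0) by ring.
    eapply Rle_trans; [apply Rabs_triang | lra]. }
  assert (1 <= INR (fact n)) by (apply (le_INR 1), Factorial.lt_O_fact).
  destruct (Compare_dec.le_dec n p).
  - assert (1 <= INR (fact (p - n))) by (apply (le_INR 1), Factorial.lt_O_fact).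
    rewrite Rabs_mult, Rabs_right, <- RPow_abs
      by (apply Rle_ge, Rlt_le, Rdiv_lt_0_compat; apply fact_pos).
    assert (Rabs y ^ (p - n) <= a ^ p).
    { eapply Rle_trans; [apply pow_incr; split; [apply Rabs_pos | exact Hya]|].
      apply Rle_pow; auto; lia. }
    assert (INR (fact p) / INR (fact (p - n)) <= INR (fact p)).
    { unfold Rdiv. rewrite <- (Rmult_1_r (INR (fact p))) at 2.
      apply Rmult_le_compat_l; [lra|]. rewrite <- Rinv_1. apply Rinv_le_contravar; lra. }
    apply (Rle_trans _ (INR (fact p) * a ^ p)).
    + apply Rmult_le_compat; auto; [apply Rlt_le, Rdiv_lt_0_compat; apply fact_pos|].
      apply pow_le, Rabs_pos.
    + rewrite <- (Rmult_1_r (INR (fact p) * a ^ p)) at 1.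
      apply Rmult_le_compat_l; [apply Rmult_le_pos|]; lra.
  - rewrite Rabs_R0. apply Rmult_le_pos; [apply Rmult_le_pos|]; lra.
Qed.

Lemma cauchy_bounded_const c x0 : cauchy_bounded (fun _ => c) x0.
Proof.
  apply (cauchy_bounded_ext _ (fun t => c * t ^ 0)); [intros; simpl; ring|].
  apply cauchy_bounded_scal, cauchy_bounded_pow.
Qed.

Lemma cauchy_bounded_mult f g x0 :
  cauchy_bounded f x0 -> cauchy_bounded g x0 -> cauchy_bounded (fun t => f t * g t) x0.
Proof.
  intros Hf Hg.
  apply (cauchy_bounded_ext _ (fun t => / 4 * (f t + g t) ^ 2 + (- / 4) * (f t + (-1) * g t) ^ 2));
    [intros; field|].
  apply cauchy_bounded_plus; apply cauchy_bounded_scal.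
  - apply (cauchy_bounded_comp (fun u => u ^ 2) (fun t => f t + g t));
      [apply cauchy_bounded_plus; auto | apply cauchy_bounded_pow].
  - apply (cauchy_bounded_comp (fun u => u ^ 2) (fun t => f t + -1 * g t));
      [apply cauchy_bounded_plus; [|apply cauchy_bounded_scal]; auto | apply cauchy_bounded_pow].
Qed.

Lemma Derive_n_sin_cos n : forall a b, exists A B, Rabs A + Rabs B = Rabs a + Rabs b /\
  forall x, ex_derive_n (fun t => a * sin t + b * cos t) n x /\
            Derive_n (fun t => a * sin t + b * cos t) n x = A * sin x + B * cos x.
Proof.
  induction n as [|n IH]; intros a b.
  { exists a, b. split; auto. intros x; split; [exact I | reflexivity]. }
  destruct (IH (- b) a) as [A [B [HAB H]]]. exists A, B.
  split; [rewrite HAB, Rabs_Ropp; ring|].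
  assert (HD : forall t, Derive (fun t => a * sin t + b * cos t) t = - b * sin t + a * cos t).
  { intros t. apply is_derive_unique. auto_derive; auto. ring. }
  intros x. split.
  - apply ex_derive_n_S; [auto_derive; auto|].
    eapply ex_derive_n_ext; [|apply (proj1 (H x))]. intros t. symmetry. apply HD.
  - rewrite Derive_n_S, <- (proj2 (H x)). apply Derive_n_ext, HD.
Qed.

Lemma cauchy_bounded_sin_cos a b x0 : cauchy_bounded (fun t => a * sin t + b * cos t) x0.
Proof.
  exists 1, 1, (Rabs a + Rabs b + 1). pose proof (Rabs_pos a). pose proof (Rabs_pos b).
  split; [lra|]. split; [lra|]. split; [lra|].
  intros n y _. destruct (Derive_n_sin_cos n a b) as [A [B [HAB Hn]]].
  split; [apply Hn|]. rewrite (proj2 (Hn y)), pow1, Rdiv_1_r.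
  assert (1 <= INR (fact n)) by (apply (le_INR 1), Factorial.lt_O_fact).
  eapply Rle_trans; [apply Rabs_triang|]. rewrite !Rabs_mult.
  assert (Rabs (sin y) <= 1) by apply Rabs_le, SIN_bound.
  assert (Rabs (cos y) <= 1) by apply Rabs_le, COS_bound.
  pose proof (Rabs_pos A). pose proof (Rabs_pos B).
  pose proof (Rabs_pos (sin y)). pose proof (Rabs_pos (cos y)).
  apply (Rle_trans _ (Rabs A + Rabs B)); nra.
Qed.

Lemma cauchy_bounded_exp x0 : cauchy_bounded exp x0.
Proof.
  exists 1, 1, (exp (x0 + 1)). pose proof (exp_pos (x0 + 1)).
  split; [lra|]. split; [lra|]. split; [lra|].
  intros n y Hy. pose proof (is_derive_n_exp n y) as Hn.
  split; [destruct n; [exact I | eexists; exact Hn]|]. rewrite (is_derive_n_unique _ _ _ _ Hn), pow1, Rdiv_1_r.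
  assert (1 <= INR (fact n)) by (apply (le_INR 1), Factorial.lt_O_fact).
  rewrite Rabs_right by (apply Rle_ge, Rlt_le, exp_pos).
  assert (exp y <= exp (x0 + 1))
    by (apply Rlt_le, exp_increasing; apply Rabs_def2 in Hy; lra).
  nra.
Qed.

Lemma cauchy_bounded_inv x0 : x0 <> 0 -> cauchy_bounded (fun t => / t) x0.
Proof.
  intros Hx. assert (Ha : 0 < Rabs x0) by (apply Rabs_pos_lt; auto).
  assert (Heq : forall t, / t = 1 / (0 - (-1) * t)).
  { intros t. unfold Rdiv. rewrite Rmult_1_l. f_equal. ring. }
  exists (Rabs x0 / 2), (Rabs x0 / 2), (2 / Rabs x0).
  split; [lra|]. split; [lra|]. split; [apply Rdiv_lt_0_compat; lra|].
  intros n y Hyx.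
  assert (Hy : Rabs x0 / 2 < Rabs y).
  { pose proof (Rabs_triang_inv x0 (x0 - y)). replace (x0 - (x0 - y)) with y in H by ring.
    rewrite <- Rabs_Ropp in Hyx. replace (- (y - x0)) with (x0 - y) in Hyx by ring. lra. }
  assert (Hy0 : 0 - -1 * y <> 0).
  { intro Hc. assert (y = 0) by lra. subst. rewrite Rabs_R0 in Hy. lra. }
  destruct (Derive_n_div_affine 1 0 (-1) n y Hy0) as [Hex HD].
  split; [eapply ex_derive_n_ext; [intros t; symmetry; apply Heq | exact Hex]|].
  rewrite (Derive_n_ext (fun t => / t) (fun t => 1 / (0 - -1 * t)) n y Heq), HD. replace (0 - -1 * y) with y by ring.
  replace (Rabs (1 * INR (fact n) * (-1) ^ n / y ^ (S n))) with (INR (fact n) / Rabs y ^ (S n)).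
  2: { unfold Rdiv. rewrite !Rabs_mult, Rabs_R1, pow_1_abs, Rabs_inv, <- RPow_abs,
         (Rabs_right (INR (fact n))) by (apply Rle_ge, Rlt_le, fact_pos). ring. }
  replace (2 / Rabs x0 * INR (fact n) / (Rabs x0 / 2) ^ n)
    with (INR (fact n) / (Rabs x0 / 2) ^ (S n))
    by (simpl; field; repeat split; try lra; apply pow_nonzero; lra).
  unfold Rdiv. apply Rmult_le_compat_l; [apply Rlt_le, fact_pos|].
  apply Rinv_le_contravar; [apply pow_lt; lra | apply pow_incr; lra].
Qed.

(* The derivative bounds of [f'] shift by one order; the new constant absorbs the factor
   [n + 1 <= (n + 1)!/n!] and the value of [f] itself. *)
Lemma cauchy_bounded_antiderivative f h x0 r0 : 0 < r0 ->
  (forall y, Rabs (y - x0) < r0 -> is_derive f y (h y)) ->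
  cauchy_bounded h x0 -> cauchy_bounded f x0.
Proof.
  intros Hr0 Hd [r [rho [M [Hr [Hrho [HM H]]]]]].
  set (r' := Rmin r0 r).
  assert (Hr' : 0 < r') by (apply Rmin_pos; auto).
  assert (Hin : forall y, Rabs (y - x0) < r' -> Rabs (y - x0) < r0 /\ Rabs (y - x0) < r).
  { intros y Hy. split; (eapply Rlt_le_trans; [exact Hy|]); [apply Rmin_l | apply Rmin_r]. }
  assert (HDf : forall y, Rabs (y - x0) < r' -> locally y (fun t => h t = Derive f t)).
  { intros y Hy. apply (open_locally (rball x0 r')); [apply open_rball | exact Hy |].
    intros t Ht. symmetry. apply is_derive_unique, Hd, Hin, Ht. }
  set (M' := Rabs (f x0) + M * r' + M * rho + 1).
  exists r', rho, M'. split; [auto|]. split; [auto|].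
  split; [unfold M'; pose proof (Rabs_pos (f x0)); nra|].
  intros n y Hy. destruct (Hin y Hy) as [Hy0 Hy1].
  destruct n as [|m].
  - split; [exact I|]. simpl. rewrite Rdiv_1_r, Rmult_1_r.
    assert (Rabs (f y - f x0) <= M * Rabs (y - x0)).
    { apply (bounded_variation f h). intros t Ht. destruct (Hin t ltac:(lra)) as [Ht0 Ht1].
      split; [apply Hd; auto|]. destruct (H 0%nat t Ht1) as [_ Hb]. simpl in Hb. lra. }
    pose proof (Rabs_triang_inv (f y) (f x0)). pose proof (Rabs_pos (y - x0)).
    unfold M'. nra.
  - split.
    { apply ex_derive_n_S; [eexists; apply Hd; auto|].
      apply (ex_derive_n_ext_loc h); [apply HDf; auto | apply H; auto]. }
    rewrite Derive_n_S, <- (Derive_n_ext_loc _ _ _ _ (HDf y Hy)).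
    eapply Rle_trans; [apply H; auto|].
    assert (0 < rho ^ m) by (apply pow_lt; lra).
    pose proof (fact_pos m). assert (1 <= INR (S m)) by (apply (le_INR 1); lia).
    replace (M' * INR (fact (S m)) / rho ^ S m)
      with ((M' / rho) * INR (S m) * (INR (fact m) / rho ^ m))
      by (rewrite fact_simpl, mult_INR, <- tech_pow_Rmult; field; split; lra).
    replace (M * INR (fact m) / rho ^ m) with (M * (INR (fact m) / rho ^ m)) by (field; lra).
    apply Rmult_le_compat_r; [apply Rlt_le, Rdiv_lt_0_compat; lra|].
    assert (M <= M' / rho).
    { apply (Rmult_le_reg_r rho); auto. unfold Rdiv.
      rewrite Rmult_assoc, Rinv_l, Rmult_1_r by lra.
      unfold M'. pose proof (Rabs_pos (f x0)). nra. }
    nra.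
Qed.

Lemma cauchy_bounded_ln x0 : 0 < x0 -> cauchy_bounded ln x0.
Proof.
  intros Hx. apply (cauchy_bounded_antiderivative ln (fun t => / t) x0 (x0 / 2)); [lra| |].
  - intros y Hy. apply is_derive_ln. apply Rabs_def2 in Hy. lra.
  - apply cauchy_bounded_inv. lra.
Qed.

Lemma cauchy_bounded_atan x0 : cauchy_bounded atan x0.
Proof.
  apply (cauchy_bounded_antiderivative atan (fun t => / (1 + t ^ 2)) x0 1); [lra| |].
  - intros y _. apply is_derive_Reals, derivable_pt_lim_atan.
  - apply (cauchy_bounded_comp (fun u => / u) (fun t => 1 + t ^ 2)).
    + apply cauchy_bounded_plus; [apply cauchy_bounded_const | apply cauchy_bounded_pow].
    + apply cauchy_bounded_inv. pose proof (pow2_ge_0 x0). lra.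
Qed.

Lemma cauchy_bounded_sqrt x0 : 0 < x0 -> cauchy_bounded sqrt x0.
Proof.
  intros Hx. apply (cauchy_bounded_ext_loc sqrt (fun t => exp (/ 2 * ln t)) x0 (x0 / 2)); [lra| |].
  - intros y Hy. apply Rabs_def2 in Hy. rewrite <- Rpower_sqrt by lra. reflexivity.
  - apply (cauchy_bounded_comp exp (fun t => / 2 * ln t)).
    + apply cauchy_bounded_scal, cauchy_bounded_ln; auto.
    + apply cauchy_bounded_exp.
Qed.

Definition taylor_sum (f : R -> R) (x0 y : R) (n : nat) : R :=
  sum_f_R0 (fun m => Derive_n f m x0 / INR (fact m) * (y - x0) ^ m) n.

Lemma taylor_remainder_le h D M rho n : 0 < rho ->
  Rabs D <= M * INR (fact (S n)) / rho ^ S n ->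
  Rabs (h ^ S n / INR (fact (S n)) * D) <= M * (Rabs h / rho) ^ S n.
Proof.
  intros Hr HD. pose proof (fact_pos (S n)).
  assert (0 < rho ^ S n) by (apply pow_lt; lra).
  rewrite Rabs_mult. unfold Rdiv.
  rewrite Rabs_mult, Rabs_inv, <- RPow_abs, (Rabs_right (INR _)) by lra.
  apply (Rle_trans _ (Rabs h ^ S n * / INR (fact (S n)) * (M * INR (fact (S n)) * / rho ^ S n))).
  - apply Rmult_le_compat_l; [|exact HD].
    apply Rmult_le_pos; [apply pow_le, Rabs_pos | apply Rlt_le, Rinv_0_lt_compat; lra].
  - right. rewrite Rpow_mult_distr, pow_inv. field. lra.
Qed.

Lemma taylor_sum_bound_right f x0 r rho M y n : 0 < rho -> x0 < y -> Rabs (y - x0) < r ->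
  cauchy_bound f x0 r rho M ->
  Rabs (taylor_sum f x0 y n - f y) <= M * (Rabs (y - x0) / rho) ^ S n.
Proof.
  intros Hrho Hxy Hy H. rewrite Rabs_right in Hy by lra.
  destruct (Taylor_Lagrange f n x0 y Hxy) as [z [Hz Heq]].
  { intros t Ht k _. apply H. rewrite Rabs_right; lra. }
  rewrite Heq. unfold taylor_sum.
  rewrite (sum_eq (fun m => Derive_n f m x0 / INR (fact m) * (y - x0) ^ m)
                  (fun m => (y - x0) ^ m / INR (fact m) * Derive_n f m x0))
    by (intros i _; field; apply INR_fact_neq_0).
  match goal with |- Rabs (?S - (?S + ?T)) <= _ => replace (S - (S + T)) with (- T) by ring end.
  rewrite Rabs_Ropp. apply taylor_remainder_le; auto. apply H.
  rewrite Rabs_right; lra.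
Qed.

Lemma cauchy_bound_opp f x0 r rho M :
  cauchy_bound f x0 r rho M -> cauchy_bound (fun t => f (- t)) (- x0) r rho M.
Proof.
  intros H n y Hy.
  assert (Hloc : locally (- y) (fun u => forall k, (k <= n)%nat -> ex_derive_n f k u)).
  { apply (open_locally (rball x0 r)); [apply open_rball | |].
    - unfold rball. rewrite <- Rabs_Ropp. now replace (- (- y - x0)) with (y - - x0) by ring.
    - intros u Hu k _. apply H, Hu. }
  split; [apply ex_derive_n_comp_opp, Hloc|].
  rewrite Derive_n_comp_opp, Rabs_mult, pow_1_abs, Rmult_1_l by exact Hloc.
  apply H. rewrite <- Rabs_Ropp. now replace (- (- y - x0)) with (y - - x0) by ring.
Qed.

Lemma taylor_sum_opp f x0 y n :
  locally x0 (fun u => forall k, (k <= n)%nat -> ex_derive_n f k u) ->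
  taylor_sum (fun t => f (- t)) (- x0) (- y) n = taylor_sum f x0 y n.
Proof.
  intros Hloc. unfold taylor_sum. apply sum_eq. intros i Hi.
  rewrite Derive_n_comp_opp, Ropp_involutive.
  2: { rewrite Ropp_involutive. eapply filter_imp; [|exact Hloc].
       intros u Hu k Hk. apply Hu. lia. }
  replace (- y - - x0) with (-1 * (y - x0)) by ring.
  rewrite Rpow_mult_distr.
  assert (Hs : (-1) ^ i * (-1) ^ i = 1)
    by (rewrite <- Rpow_mult_distr; replace (-1 * -1) with 1 by ring; apply pow1).
  pose proof (INR_fact_neq_0 i).
  set (s := (-1) ^ i) in *. set (p := (y - x0) ^ i). set (F := INR (fact i)) in *.
  transitivity (s * s * (Derive_n f i x0 / F * p)); [field; auto | rewrite Hs; ring].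
Qed.

Lemma taylor_sum_bound f x0 r rho M y n : 0 < rho -> Rabs (y - x0) < r ->
  cauchy_bound f x0 r rho M ->
  Rabs (taylor_sum f x0 y n - f y) <= M * (Rabs (y - x0) / rho) ^ S n.
Proof.
  intros Hrho Hy H.
  destruct (total_order_T y x0) as [[Hlt|<-]|Hgt].
  - assert (Hr : 0 < r) by (pose proof (Rabs_pos (y - x0)); lra).
    assert (Hyr : Rabs (- y - - x0) = Rabs (y - x0))
      by (rewrite <- Rabs_Ropp; f_equal; ring).
    pose proof (taylor_sum_bound_right (fun t => f (- t)) (- x0) r rho M (- y) n Hrho
                  ltac:(lra) ltac:(lra) (cauchy_bound_opp f x0 r rho M H)) as Hb.
    rewrite taylor_sum_opp, Ropp_involutive, Hyr in Hb; [exact Hb|].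
    apply (open_locally (rball x0 r)); [apply open_rball | |].
    + unfold rball. now rewrite Rminus_diag, Rabs_R0.
    + intros u Hu k _. apply H, Hu.
  - rewrite Rminus_diag, Rabs_R0, Rdiv_0_l, pow_i by lia.
    replace (taylor_sum f y y n - f y) with 0; [rewrite Rabs_R0; lra|].
    unfold taylor_sum. rewrite Rminus_diag.
    induction n as [|n IH]; [simpl; field|]. rewrite tech5, pow_i by lia. lra.
  - apply (taylor_sum_bound_right _ _ r); auto.
Qed.

Lemma cauchy_bounded_is_pseries f x0 : cauchy_bounded f x0 ->
  exists (c : nat -> R) (r : R), 0 < r /\
    forall y, Rabs (y - x0) < r -> is_pseries c (y - x0) (f y).
Proof.
  intros [r [rho [M [Hr [Hrho [HM H]]]]]].
  exists (fun m => Derive_n f m x0 / INR (fact m)), (Rmin r (rho / 2)).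
  split; [apply Rmin_pos; lra|]. intros y Hy.
  assert (Hy1 : Rabs (y - x0) < r) by (eapply Rlt_le_trans; [exact Hy | apply Rmin_l]).
  assert (Hy2 : Rabs (y - x0) < rho / 2) by (eapply Rlt_le_trans; [exact Hy | apply Rmin_r]).
  set (q := Rabs (y - x0) / rho).
  assert (Hq : Rabs q < 1).
  { unfold q. rewrite Rabs_right.
    - apply (Rmult_lt_reg_r rho); auto. unfold Rdiv.
      rewrite Rmult_assoc, Rinv_l, Rmult_1_r by lra. lra.
    - apply Rle_ge, Rmult_le_pos; [apply Rabs_pos | apply Rlt_le, Rinv_0_lt_compat; lra]. }
  assert (Hlim : is_lim_seq (fun n => q ^ S n) 0)
    by apply (is_lim_seq_incr_1 (fun n => q ^ n)), is_lim_seq_geom, Hq.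
  assert (Hsum : forall n,
    sum_n (fun k => scal (pow_n (y - x0) k) (Derive_n f k x0 / INR (fact k))) n
    = taylor_sum f x0 y n).
  { intros n. rewrite sum_n_Reals. apply sum_eq. intros i _. rewrite pow_n_pow.
    change (scal ((y - x0) ^ i) (Derive_n f i x0 / INR (fact i)))
      with ((y - x0) ^ i * (Derive_n f i x0 / INR (fact i))). ring. }
  unfold is_pseries.
  change (is_lim_seq (sum_n (fun k => scal (pow_n (y - x0) k) (Derive_n f k x0 / INR (fact k))))
                     (f y)).
  apply (is_lim_seq_le_le (fun n => f y - M * q ^ S n) _ (fun n => f y + M * q ^ S n)).
  - intros n. rewrite Hsum.
    pose proof (taylor_sum_bound f x0 r rho M y n Hrho Hy1 H) as Hb.
    apply Rabs_le_between in Hb. fold q in Hb. lra.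
  - replace (Finite (f y)) with (Finite (f y - M * 0)) by (f_equal; ring).
    apply is_lim_seq_minus'; [apply is_lim_seq_const | apply is_lim_seq_mult'; auto].
    apply is_lim_seq_const.
  - replace (Finite (f y)) with (Finite (f y + M * 0)) by (f_equal; ring).
    apply is_lim_seq_plus'; [apply is_lim_seq_const | apply is_lim_seq_mult'; auto].
    apply is_lim_seq_const.
Qed.

Lemma cauchy_bounded_ex_derive_n f x n : cauchy_bounded f x -> ex_derive_n f n x.
Proof.
  intros [r [rho [M [Hr [_ [_ H]]]]]]. apply (H n x). now rewrite Rminus_diag, Rabs_R0.
Qed.

Lemma cauchy_bounded_continuous f x : cauchy_bounded f x -> continuous f x.
Proof. intros H. apply (ex_derive_continuous f x), (cauchy_bounded_ex_derive_n f x 1 H). Qed.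

Lemma locally_near_value (f : R -> R) x e : continuous f x -> 0 < e ->
  locally x (fun t => Rabs (f t - f x) < e).
Proof.
  intros H He. apply (H (fun v => Rabs (v - f x) < e)). exists (mkposreal e He). now intros y.
Qed.

Lemma locally_pos (f : R -> R) x : continuous f x -> 0 < f x -> locally x (fun t => 0 < f t).
Proof.
  intros H Hp. apply (filter_imp (fun t => Rabs (f t - f x) < f x)).
  - intros t Ht. apply Rabs_def2 in Ht. lra.
  - apply locally_near_value; auto.
Qed.

Lemma locally_ex_radius (P : R -> Prop) x :
  locally x P -> exists e, 0 < e /\ forall t, Rabs (t - x) < e -> P t.
Proof. intros [e He]. exists e. split; [apply cond_pos | intros t Ht; now apply He]. Qed.

Lemma vnorm_sq t : vnorm t ^ 2 = dot t t.
Proof.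
  unfold vnorm. rewrite pow2_sqrt; [reflexivity|]. unfold dot.
  pose proof (pow2_ge_0 (vx t)). pose proof (pow2_ge_0 (vy t)). pose proof (pow2_ge_0 (vz t)).
  nra.
Qed.

Lemma vnorm_neq0_triple a b c : triple a b c <> 0 -> vnorm a <> 0.
Proof.
  intros H Hn. apply H. assert (Ha : dot a a = 0) by (rewrite <- vnorm_sq, Hn; ring).
  unfold dot in Ha.
  assert (vx a = 0) by nra. assert (vy a = 0) by nra. assert (vz a = 0) by nra.
  unfold triple, dot, cross, mkv; cbn [vx vy vz fst snd].
  repeat match goal with E : _ = 0 |- _ => rewrite E end. ring.
Qed.

Lemma rot_0 t v : rot t 0 v = v.
Proof.
  destruct v as [[a b] c]. unfold rot, vadd, vscal, mkv. rewrite cos_0, sin_0.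
  cbn [vx vy vz fst snd].
  apply (f_equal2 pair); [apply (f_equal2 pair)|]; unfold Rdiv; ring.
Qed.

Definition axial_part (t v : vec3) : vec3 := vscal (dot t v / vnorm t ^ 2) t.
Definition radial_part (t v : vec3) : vec3 := vadd v (vscal (-1) (axial_part t v)).
Definition tangential_part (t v : vec3) : vec3 := vscal (/ vnorm t) (cross t v).

Lemma dot_rot u t phi v : dot u (rot t phi v) =
  dot u (axial_part t v) + dot u (radial_part t v) * cos phi + dot u (tangential_part t v) * sin phi.
Proof.
  unfold rot, radial_part, axial_part, tangential_part, dot, cross, vadd, vscal, mkv, Rdiv.
  cbn [vx vy vz fst snd]. ring.
Qed.

Lemma cos_2atan u : cos (2 * atan u) = (1 - u * u) / (1 + u * u).
Proof.
  rewrite cos_2a, cos_atan, sin_atan. unfold Rsqr.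
  assert (Hs : sqrt (1 + u * u) * sqrt (1 + u * u) = 1 + u * u) by (apply sqrt_sqrt; nra).
  assert (Hs0 : sqrt (1 + u * u) <> 0) by (apply Rgt_not_eq, sqrt_lt_R0; nra).
  set (s := sqrt (1 + u * u)) in *.
  replace (1 / s * (1 / s) - u / s * (u / s)) with ((1 - u * u) / (s * s)) by (field; auto).
  now rewrite Hs.
Qed.

Lemma sin_2atan u : sin (2 * atan u) = 2 * u / (1 + u * u).
Proof.
  rewrite sin_2a, cos_atan, sin_atan. unfold Rsqr.
  assert (Hs : sqrt (1 + u * u) * sqrt (1 + u * u) = 1 + u * u) by (apply sqrt_sqrt; nra).
  assert (Hs0 : sqrt (1 + u * u) <> 0) by (apply Rgt_not_eq, sqrt_lt_R0; nra).
  set (s := sqrt (1 + u * u)) in *.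
  replace (2 * (u / s) * (1 / s)) with (2 * u / (s * s)) by (field; auto).
  now rewrite Hs.
Qed.

Definition trig_discr (a b c : R) : R := c * c - (a - b) * (a + b).
Definition trig_denom (a b c s : R) : R := c + s * sqrt (trig_discr a b c).

(* With u = tan(y/2), the equation a + b cos y + c sin y = 0 becomes the quadratic
   (a - b) u^2 + 2 c u + (a + b) = 0, whose roots are -(a + b) / (c +- sqrt discr). *)
Lemma trig_eq_half_angle_root a b c s : s * s = 1 -> 0 <= trig_discr a b c ->
  trig_denom a b c s <> 0 ->
  let y := 2 * atan (- (a + b) / trig_denom a b c s) in a + b * cos y + c * sin y = 0.
Proof.
  intros Hs HD Hd y. unfold y. rewrite cos_2atan, sin_2atan.
  set (d := trig_denom a b c s) in *. set (u := - (a + b) / d).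
  assert (Hr : sqrt (trig_discr a b c) * sqrt (trig_discr a b c) = trig_discr a b c)
    by (apply sqrt_sqrt; auto).
  assert (Hq : (a + b) + 2 * c * u + (a - b) * u * u = 0).
  { unfold u. replace ((a + b) + 2 * c * (- (a + b) / d) + (a - b) * (- (a + b) / d) * (- (a + b) / d))
      with ((a + b) * ((d - c) * (d - c) - trig_discr a b c) / (d * d))
      by (unfold trig_discr; field; auto).
    replace (d - c) with (s * sqrt (trig_discr a b c)) by (unfold d, trig_denom; ring).
    replace (s * sqrt (trig_discr a b c) * (s * sqrt (trig_discr a b c)))
      with (s * s * (sqrt (trig_discr a b c) * sqrt (trig_discr a b c))) by ring.
    rewrite Hr, Hs. unfold Rdiv. ring. }
  assert (Hp : 0 < 1 + u * u) by nra.
  replace (a + b * ((1 - u * u) / (1 + u * u)) + c * (2 * u / (1 + u * u)))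
    with (((a + b) + 2 * c * u + (a - b) * u * u) / (1 + u * u)) by (field; lra).
  rewrite Hq. unfold Rdiv. ring.
Qed.

Lemma Rabs_trig_le k0 k1 k2 t : Rabs (k0 + k1 * cos t + k2 * sin t) <= Rabs k0 + Rabs k1 + Rabs k2.
Proof.
  assert (Rabs (cos t) <= 1) by apply Rabs_le, COS_bound.
  assert (Rabs (sin t) <= 1) by apply Rabs_le, SIN_bound.
  eapply Rle_trans; [apply Rabs_triang|].
  eapply Rle_trans; [apply Rplus_le_compat_r, Rabs_triang|].
  rewrite !Rabs_mult. pose proof (Rabs_pos k1). pose proof (Rabs_pos k2).
  pose proof (Rabs_pos (cos t)). pose proof (Rabs_pos (sin t)). nra.
Qed.

Lemma Rabs_sin_le y : Rabs (sin y) <= Rabs y.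
Proof.
  replace (sin y) with (sin y - sin 0) by (rewrite sin_0; ring).
  replace (Rabs y) with (1 * Rabs (y - 0)) by (rewrite Rminus_0_r; ring).
  apply (bounded_variation sin cos). intros t _.
  split; [apply is_derive_Reals, derivable_pt_lim_sin | apply Rabs_le, COS_bound].
Qed.

Lemma Rabs_cos_sub1_le y : Rabs (cos y - 1) <= Rabs y.
Proof.
  replace (cos y - 1) with (cos y - cos 0) by (rewrite cos_0; ring).
  replace (Rabs y) with (1 * Rabs (y - 0)) by (rewrite Rminus_0_r; ring).
  apply (bounded_variation cos (fun t => - sin t)). intros t _.
  split; [apply is_derive_Reals, derivable_pt_lim_cos|].
  rewrite Rabs_Ropp. apply Rabs_le, SIN_bound.
Qed.

Lemma trig_deriv_neq0 b c c0 K y : 0 <= K -> Rabs b <= K -> Rabs c <= K ->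
  Rabs (c - c0) < Rabs c0 / 2 -> Rabs y < Rabs c0 / (4 * (K + 1)) ->
  - b * sin y + c * cos y <> 0.
Proof.
  intros HK Hb Hc Hcc0 Hy Hd. pose proof (Rabs_pos (c - c0)).
  assert (HKy : K * Rabs y <= Rabs c0 / 4).
  { apply (Rle_trans _ (K * (Rabs c0 / (4 * (K + 1))))); [apply Rmult_le_compat_l; lra|].
    apply (Rmult_le_reg_r (4 * (K + 1))); [lra|].
    replace (K * (Rabs c0 / (4 * (K + 1))) * (4 * (K + 1))) with (K * Rabs c0) by (field; lra).
    replace (Rabs c0 / 4 * (4 * (K + 1))) with (K * Rabs c0 + Rabs c0) by field. lra. }
  assert (T1 : Rabs (c * (cos y - 1)) <= K * Rabs y).
  { rewrite Rabs_mult. apply Rmult_le_compat; try apply Rabs_pos; auto. apply Rabs_cos_sub1_le. }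
  assert (T2 : Rabs (b * sin y) <= K * Rabs y).
  { rewrite Rabs_mult. apply Rmult_le_compat; try apply Rabs_pos; auto. apply Rabs_sin_le. }
  assert (Heq : c0 = - ((c - c0) + c * (cos y - 1) - b * sin y)) by lra.
  assert (Rabs c0 <= Rabs (c - c0) + Rabs (c * (cos y - 1)) + Rabs (b * sin y)); [|lra].
  rewrite Heq at 1. rewrite Rabs_Ropp. unfold Rminus at 2.
  eapply Rle_trans; [apply Rabs_triang|]. rewrite Rabs_Ropp.
  apply Rplus_le_compat_r, Rabs_triang.
Qed.

Lemma ex_derive_continuity_pt (f : R -> R) x : ex_derive f x -> continuity_pt f x.
Proof. intros H. apply continuity_pt_filterlim, (ex_derive_continuous f x H). Qed.

Lemma trig_root_unique a b c c0 K y1 y2 : 0 <= K -> Rabs b <= K -> Rabs c <= K ->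
  Rabs (c - c0) < Rabs c0 / 2 ->
  Rabs y1 < Rabs c0 / (4 * (K + 1)) -> Rabs y2 < Rabs c0 / (4 * (K + 1)) ->
  a + b * cos y1 + c * sin y1 = 0 -> a + b * cos y2 + c * sin y2 = 0 -> y1 = y2.
Proof.
  intros HK Hb Hc Hcc0 Hy1 Hy2 E1 E2.
  destruct (MVT_gen (fun y => a + b * cos y + c * sin y) y1 y2
              (fun y => - b * sin y + c * cos y)) as [z [Hz Heq]].
  - intros x _. auto_derive; auto. ring.
  - intros x _. apply ex_derive_continuity_pt. auto_derive; auto.
  - cbv beta in Heq. rewrite E1, E2 in Heq.
    assert (Hz' : Rabs z < Rabs c0 / (4 * (K + 1))).
    { apply Rabs_def2 in Hy1. apply Rabs_def2 in Hy2. apply Rabs_def1.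
      - eapply Rle_lt_trans; [apply Hz | apply Rmax_lub_lt; lra].
      - eapply Rlt_le_trans; [|apply Hz]. apply Rmin_glb_lt; lra. }
    pose proof (trig_deriv_neq0 b c c0 K z HK Hb Hc Hcc0 Hz').
    assert ((- b * sin z + c * cos z) * (y2 - y1) = 0) by lra.
    apply Rmult_integral in H0 as [|]; [contradiction | lra].
Qed.

Lemma continuous_stays_below (g : R -> R) a b k : a < 0 < b ->
  (forall t, a < t < b -> continuity_pt g t) -> Rabs (g 0) < k ->
  (forall t, a < t < b -> Rabs (g t) <> k) -> forall t, a < t < b -> Rabs (g t) < k.
Proof.
  intros Hab Hc H0 Hne t Ht.
  destruct (Rlt_le_dec (Rabs (g t)) k) as [|Hge]; [assumption|]. exfalso.
  assert (Hgt : k < Rabs (g t)) by (destruct Hge; [auto | exfalso; apply (Hne t Ht); auto]).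
  assert (Hcabs : forall s, a < s < b -> continuity_pt (fun u => Rabs (g u) - k) s).
  { intros s Hs. apply continuity_pt_minus; [|apply continuity_pt_const; intros ??; auto].
    apply (continuity_pt_comp g Rabs); [apply Hc, Hs | apply Rcontinuity_abs]. }
  destruct (Rtotal_order t 0) as [Hn|[->|Hp]]; [| lra |].
  - destruct (Ranalysis5.IVT_interv (fun u => - (Rabs (g u) - k)) t 0) as [z [Hz Hz0]]; auto; try lra.
    { intros s Hs. apply continuity_pt_opp, Hcabs. lra. }
    apply (Hne z); lra.
  - destruct (Ranalysis5.IVT_interv (fun u => Rabs (g u) - k) 0 t) as [z [Hz Hz0]]; auto; try lra.
    { intros s Hs. apply Hcabs. lra. }
    apply (Hne z); lra.
Qed.

Ltac unfold_vec :=
  unfold f_comp, t2d, t3d, rot, radial_part, axial_part, tangential_part,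
    triple, dot, cross, vadd, vscal, mkv, Rdiv;
  cbn [vx vy vz fst snd].

Section Configuration.
Variables t1 t2 t3 t4 : vec3.

Definition coef_a th := dot (axial_part t1 t2) (t3d t3 t4 th) - dot t2 t3.
Definition coef_b th := dot (radial_part t1 t2) (t3d t3 t4 th).
Definition coef_c th := dot (tangential_part t1 t2) (t3d t3 t4 th).

Lemma f_comp_trig y th :
  f_comp t1 t2 t3 t4 y th = coef_a th + coef_b th * cos y + coef_c th * sin y.
Proof. unfold coef_a, coef_b, coef_c. unfold_vec. ring. Qed.

Lemma cauchy_bounded_dot_t3d V x0 : cauchy_bounded (fun th => dot V (t3d t3 t4 th)) x0.
Proof.
  apply (cauchy_bounded_ext _ (fun th => dot V (axial_part t4 t3) +
           (dot V (tangential_part t4 t3) * sin th + dot V (radial_part t4 t3) * cos th))).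
  { intros th. unfold t3d. rewrite dot_rot. ring. }
  apply cauchy_bounded_plus; [apply cauchy_bounded_const | apply cauchy_bounded_sin_cos].
Qed.

Lemma cauchy_bounded_coef_a x0 : cauchy_bounded coef_a x0.
Proof.
  apply (cauchy_bounded_ext _ (fun th => dot (axial_part t1 t2) (t3d t3 t4 th) + (-1) * dot t2 t3));
    [intros; unfold coef_a; ring|].
  apply cauchy_bounded_plus; [apply cauchy_bounded_dot_t3d | apply cauchy_bounded_const].
Qed.

Definition root_sign := if Rle_dec 0 (coef_c 0) then 1 else -1.
Definition discr th := trig_discr (coef_a th) (coef_b th) (coef_c th).
Definition denom th := trig_denom (coef_a th) (coef_b th) (coef_c th) root_sign.
Definition gamma_sol th := 2 * atan (- (coef_a th + coef_b th) / denom th).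

Lemma f_comp_gamma_sol th : 0 <= discr th -> denom th <> 0 ->
  f_comp t1 t2 t3 t4 (gamma_sol th) th = 0.
Proof.
  intros HD Hd. rewrite f_comp_trig. apply trig_eq_half_angle_root; auto.
  unfold root_sign. destruct (Rle_dec 0 (coef_c 0)); ring.
Qed.

Lemma cauchy_bounded_discr x0 : cauchy_bounded discr x0.
Proof.
  pose proof (cauchy_bounded_coef_a x0) as Ha.
  pose proof (cauchy_bounded_dot_t3d (radial_part t1 t2) x0) as Hb.
  pose proof (cauchy_bounded_dot_t3d (tangential_part t1 t2) x0) as Hc.
  apply (cauchy_bounded_ext _ (fun th => coef_c th * coef_c th +
           (-1) * ((coef_a th + (-1) * coef_b th) * (coef_a th + coef_b th))));
    [intros; unfold discr, trig_discr; ring|].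
  apply cauchy_bounded_plus; [apply cauchy_bounded_mult; auto|].
  apply cauchy_bounded_scal, cauchy_bounded_mult; apply cauchy_bounded_plus; auto.
  apply cauchy_bounded_scal; auto.
Qed.

Lemma cauchy_bounded_denom x0 : 0 < discr x0 -> cauchy_bounded denom x0.
Proof.
  intros HD. apply cauchy_bounded_plus; [apply cauchy_bounded_dot_t3d|].
  apply cauchy_bounded_scal, (cauchy_bounded_comp sqrt discr);
    [apply cauchy_bounded_discr | apply cauchy_bounded_sqrt, HD].
Qed.

Lemma cauchy_bounded_gamma_sol x0 : 0 < discr x0 -> denom x0 <> 0 ->
  cauchy_bounded gamma_sol x0.
Proof.
  intros HD Hd. apply cauchy_bounded_scal.
  apply (cauchy_bounded_comp atan); [|apply cauchy_bounded_atan].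
  apply (cauchy_bounded_ext _ (fun th => ((-1) * (coef_a th + coef_b th)) * / denom th));
    [intros; unfold Rdiv; ring|].
  apply cauchy_bounded_mult.
  - apply cauchy_bounded_scal, cauchy_bounded_plus;
      [apply cauchy_bounded_coef_a | apply cauchy_bounded_dot_t3d].
  - apply (cauchy_bounded_comp (fun u => / u) denom);
      [apply cauchy_bounded_denom, HD | apply cauchy_bounded_inv, Hd].
Qed.

Lemma dgamma_f_comp y th : vnorm t1 <> 0 -> vnorm t4 <> 0 ->
  - coef_b th * sin y + coef_c th * cos y = triple t1 (t2d t1 t2 y) (t3d t3 t4 th) / vnorm t1.
Proof.
  intros N1 N4.
  transitivity (triple t1 (t2d t1 t2 y) (t3d t3 t4 th) / vnorm t1
                + sin y * dot t2 (t3d t3 t4 th) * (dot t1 t1 - vnorm t1 ^ 2) / vnorm t1 ^ 2).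
  - unfold coef_b, coef_c. unfold_vec. field. split; assumption.
  - rewrite vnorm_sq. unfold Rdiv. ring.
Qed.

Definition t3d_deriv th :=
  vadd (vscal (- sin th) (radial_part t4 t3)) (vscal (cos th) (tangential_part t4 t3)).

Lemma dtheta_f_comp y th : vnorm t1 <> 0 -> vnorm t4 <> 0 ->
  dot (t2d t1 t2 y) (t3d_deriv th) = - triple (t2d t1 t2 y) (t3d t3 t4 th) t4 / vnorm t4.
Proof.
  intros N1 N4.
  transitivity (- triple (t2d t1 t2 y) (t3d t3 t4 th) t4 / vnorm t4
                + sin th * dot (t2d t1 t2 y) t3 * (dot t4 t4 - vnorm t4 ^ 2) / vnorm t4 ^ 2).
  - unfold t3d_deriv. unfold_vec. field. try split; assumption.
  - rewrite vnorm_sq. unfold Rdiv. ring.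
Qed.

Lemma is_derive_f_comp_along (g : R -> R) th : vnorm t1 <> 0 -> vnorm t4 <> 0 ->
  ex_derive g th ->
  is_derive (fun t => f_comp t1 t2 t3 t4 (g t) t) th
    (triple t1 (t2d t1 t2 (g th)) (t3d t3 t4 th) / vnorm t1 * Derive g th
     - triple (t2d t1 t2 (g th)) (t3d t3 t4 th) t4 / vnorm t4).
Proof.
  intros N1 N4 Hg.
  rewrite <- (dgamma_f_comp (g th) th N1 N4).
  unfold Rminus. rewrite <- Rdiv_opp_l, <- dtheta_f_comp by assumption.
  unfold coef_b, coef_c, t3d_deriv. unfold_vec.
  auto_derive; [repeat split; auto|].
  change (Derive (fun x => g x) th) with (Derive g th). field. split; auto.
Qed.

Lemma ex_derive_f_mv_along (g : R -> R) th : ex_derive g th ->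
  ex_derive (fun t => f_mv1 t1 t2 t3 t4 (g t) t) th /\
  ex_derive (fun t => f_mv2 t1 t2 t3 t4 (g t) t) th /\
  ex_derive (fun t => f_mv3 t1 t3 t4 (g t) t) th /\
  ex_derive (fun t => f_mv4 t1 t2 t4 (g t) t) th.
Proof.
  intros Hg. unfold f_mv1, f_mv2, f_mv3, f_mv4. unfold_vec.
  repeat split; auto_derive; repeat split; auto.
Qed.

End Configuration.

Section Solution.
Variables t1 t2 t3 t4 : vec3.
Hypotheses (H123 : triple t1 t2 t3 <> 0) (H234 : triple t2 t3 t4 <> 0)
  (H341 : triple t3 t4 t1 <> 0) (H412 : triple t4 t1 t2 <> 0).

Local Notation coefB := (coef_b t1 t2 t3 t4).
Local Notation coefC := (coef_c t1 t2 t3 t4).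
Local Notation gamma := (gamma_sol t1 t2 t3 t4).

Lemma t2d_0 : t2d t1 t2 0 = t2.
Proof. apply rot_0. Qed.

Lemma t3d_0 : t3d t3 t4 0 = t3.
Proof. apply rot_0. Qed.

Lemma coef_c_0 : coefC 0 = triple t1 t2 t3 / vnorm t1.
Proof. unfold coef_c. rewrite t3d_0. unfold_vec. ring. Qed.

Lemma coef_c_0_neq0 : coefC 0 <> 0.
Proof.
  rewrite coef_c_0. pose proof (vnorm_neq0_triple _ _ _ H123).
  unfold Rdiv. apply Rmult_integral_contrapositive_currified; auto. now apply Rinv_neq_0_compat.
Qed.

Lemma discr_0 : discr t1 t2 t3 t4 0 = coefC 0 * coefC 0.
Proof.
  assert (Hab : coef_a t1 t2 t3 t4 0 + coefB 0 = 0).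
  { unfold coef_a, coef_b. rewrite t3d_0. unfold_vec. ring. }
  unfold discr, trig_discr. rewrite Hab. ring.
Qed.

Lemma denom_0 : denom t1 t2 t3 t4 0 = 2 * coefC 0.
Proof.
  unfold denom, trig_denom. fold (discr t1 t2 t3 t4 0). rewrite discr_0.
  replace (coefC 0 * coefC 0) with (Rsqr (coefC 0)) by reflexivity.
  rewrite sqrt_Rsqr_abs. unfold root_sign.
  destruct (Rle_dec 0 (coefC 0)); [rewrite Rabs_right | rewrite Rabs_left]; lra.
Qed.

Lemma gamma_sol_0 : gamma 0 = 0.
Proof.
  unfold gamma_sol.
  replace (coef_a t1 t2 t3 t4 0 + coefB 0) with 0
    by (unfold coef_a, coef_b; rewrite t3d_0; unfold_vec; ring).
  rewrite Ropp_0, Rdiv_0_l, atan_0. ring.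
Qed.

Lemma f_mv_pos_0 : f_mv_pos t1 t2 t3 t4 (gamma 0) 0.
Proof.
  unfold f_mv_pos, f_mv1, f_mv2, f_mv3, f_mv4. rewrite gamma_sol_0, t2d_0, t3d_0.
  repeat split; apply Rsqr_pos_lt; assumption.
Qed.

Definition dot_t3d_bound V := Rabs (dot V (axial_part t4 t3)) + Rabs (dot V (radial_part t4 t3))
                              + Rabs (dot V (tangential_part t4 t3)).

Lemma Rabs_dot_t3d_le V th : Rabs (dot V (t3d t3 t4 th)) <= dot_t3d_bound V.
Proof. unfold t3d. rewrite dot_rot. apply Rabs_trig_le. Qed.

Lemma dot_t3d_bound_nonneg V : 0 <= dot_t3d_bound V.
Proof. unfold dot_t3d_bound. repeat (apply Rplus_le_le_0_compat || apply Rabs_pos). Qed.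

Definition coef_bound := dot_t3d_bound (radial_part t1 t2) + dot_t3d_bound (tangential_part t1 t2).

Lemma coef_bound_nonneg : 0 <= coef_bound.
Proof. unfold coef_bound. pose proof dot_t3d_bound_nonneg. apply Rplus_le_le_0_compat; auto. Qed.

Lemma Rabs_coef_b_le th : Rabs (coefB th) <= coef_bound.
Proof.
  pose proof (Rabs_dot_t3d_le (radial_part t1 t2) th).
  pose proof (dot_t3d_bound_nonneg (tangential_part t1 t2)). unfold coef_bound, coef_b. lra.
Qed.

Lemma Rabs_coef_c_le th : Rabs (coefC th) <= coef_bound.
Proof.
  pose proof (Rabs_dot_t3d_le (tangential_part t1 t2) th).
  pose proof (dot_t3d_bound_nonneg (radial_part t1 t2)). unfold coef_bound, coef_c. lra.
Qed.

(* Radius of the band |gamma| < eta in which [trig_root_unique] applies. *)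
Definition eta := Rabs (coefC 0) / (4 * (coef_bound + 1)).

Lemma eta_pos : 0 < eta.
Proof.
  pose proof coef_bound_nonneg. pose proof (Rabs_pos_lt _ coef_c_0_neq0).
  apply Rdiv_lt_0_compat; lra.
Qed.

Definition solution_window eps := forall th, Rabs th < eps ->
  (0 < discr t1 t2 t3 t4 th /\ denom t1 t2 t3 t4 th <> 0) /\
  f_mv_pos t1 t2 t3 t4 (gamma th) th /\
  Rabs (gamma th) < eta / 2 /\ Rabs (coefC th - coefC 0) < Rabs (coefC 0) / 2.

Lemma solution_window_exists : exists eps, 0 < eps /\ solution_window eps.
Proof.
  pose proof coef_c_0_neq0 as HC0.
  assert (HD0 : 0 < discr t1 t2 t3 t4 0) by (rewrite discr_0; apply Rsqr_pos_lt, HC0).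
  assert (Hd0 : denom t1 t2 t3 t4 0 <> 0) by (rewrite denom_0; intro; apply HC0; lra).
  assert (Hg : ex_derive gamma 0)
    by (apply (cauchy_bounded_ex_derive_n _ _ 1), cauchy_bounded_gamma_sol; auto).
  destruct (ex_derive_f_mv_along t1 t2 t3 t4 gamma 0 Hg) as [Hm1 [Hm2 [Hm3 Hm4]]].
  destruct f_mv_pos_0 as [P1 [P2 [P3 P4]]].
  pose proof eta_pos. pose proof (Rabs_pos_lt _ HC0).
  assert (Hloc : locally 0 (fun th =>
    ((0 < discr t1 t2 t3 t4 th /\
      Rabs (denom t1 t2 t3 t4 th - denom t1 t2 t3 t4 0) < Rabs (denom t1 t2 t3 t4 0)) /\
     (0 < f_mv1 t1 t2 t3 t4 (gamma th) th /\ 0 < f_mv2 t1 t2 t3 t4 (gamma th) th /\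
      0 < f_mv3 t1 t3 t4 (gamma th) th /\ 0 < f_mv4 t1 t2 t4 (gamma th) th) /\
     Rabs (gamma th - gamma 0) < eta / 2 /\ Rabs (coefC th - coefC 0) < Rabs (coefC 0) / 2))).
  { repeat apply filter_and.
    - apply locally_pos; [apply cauchy_bounded_continuous, cauchy_bounded_discr | exact HD0].
    - apply locally_near_value; [|apply Rabs_pos_lt, Hd0].
      apply cauchy_bounded_continuous, cauchy_bounded_denom, HD0.
    - apply locally_pos; [apply (ex_derive_continuous (fun t => f_mv1 _ _ _ _ _ t)) |]; auto.
    - apply locally_pos; [apply (ex_derive_continuous (fun t => f_mv2 _ _ _ _ _ t)) |]; auto.
    - apply locally_pos; [apply (ex_derive_continuous (fun t => f_mv3 _ _ _ _ t)) |]; auto.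
    - apply locally_pos; [apply (ex_derive_continuous (fun t => f_mv4 _ _ _ _ t)) |]; auto.
    - apply locally_near_value; [apply (ex_derive_continuous gamma), Hg | lra].
    - apply locally_near_value; [apply cauchy_bounded_continuous, cauchy_bounded_dot_t3d | lra]. }
  destruct (locally_ex_radius _ _ Hloc) as [eps [Heps Hall]].
  exists eps. split; [exact Heps|]. intros th Hth.
  rewrite <- (Rminus_0_r th) in Hth.
  destruct (Hall th Hth) as [[HD Hd] [[M1 [M2 [M3 M4]]] [Hgam HC]]].
  rewrite gamma_sol_0, Rminus_0_r in Hgam.
  repeat split; auto.
  intros Hc. rewrite Hc, Rminus_0_l, Rabs_Ropp in Hd. lra.
Qed.

Section Window.
Variable eps : R.
Hypotheses (eps_pos : 0 < eps) (window : solution_window eps).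

Lemma in_window th : - eps < th < eps -> Rabs th < eps.
Proof. intros. apply Rabs_def1; lra. Qed.

Lemma cauchy_bounded_gamma_window th : - eps < th < eps -> cauchy_bounded gamma th.
Proof.
  intros Hth. destruct (window th (in_window th Hth)) as [[HD Hd] _].
  apply cauchy_bounded_gamma_sol; auto.
Qed.

Lemma f_comp_gamma_window th : - eps < th < eps -> f_comp t1 t2 t3 t4 (gamma th) th = 0.
Proof.
  intros Hth. destruct (window th (in_window th Hth)) as [[HD Hd] _].
  apply f_comp_gamma_sol; auto. lra.
Qed.

Lemma gamma_C1 : C1_on gamma (- eps) eps.
Proof.
  intros th Hth. pose proof (cauchy_bounded_gamma_window th Hth) as H.
  split; [apply (cauchy_bounded_ex_derive_n _ _ 1 H)|].
  apply (ex_derive_continuous (Derive gamma)), (cauchy_bounded_ex_derive_n _ _ 2 H).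
Qed.

Lemma solution_eq_gamma_near (g : R -> R) th : - eps < th < eps ->
  f_comp t1 t2 t3 t4 (g th) th = 0 -> Rabs (g th) < eta -> g th = gamma th.
Proof.
  intros Hth Hsol Hg. destruct (window th (in_window th Hth)) as [_ [_ [Hgam HC]]].
  pose proof eta_pos.
  apply (trig_root_unique (coef_a t1 t2 t3 t4 th) (coefB th) (coefC th) (coefC 0) coef_bound);
    auto using coef_bound_nonneg, Rabs_coef_b_le, Rabs_coef_c_le; try (unfold eta in *; lra).
  - now rewrite <- f_comp_trig.
  - rewrite <- f_comp_trig. apply f_comp_gamma_window, Hth.
Qed.

(* A continuous solution starting at 0 cannot reach |g| = 3 eta / 4, since there it would agree
   with gamma, which stays below eta / 2. *)
Lemma solution_unique (g : R -> R) : C1_on g (- eps) eps -> g 0 = 0 ->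
  (forall th, - eps < th < eps -> f_comp t1 t2 t3 t4 (g th) th = 0) ->
  forall th, - eps < th < eps -> g th = gamma th.
Proof.
  intros Hg Hg0 Hsol. pose proof eta_pos.
  assert (Hsmall : forall th, - eps < th < eps -> Rabs (g th) < 3 * eta / 4).
  { apply continuous_stays_below; [lra | | rewrite Hg0, Rabs_R0; lra |].
    - intros th Hth. apply ex_derive_continuity_pt, Hg, Hth.
    - intros th Hth Habs.
      rewrite (solution_eq_gamma_near g th Hth (Hsol th Hth)) in Habs by lra.
      destruct (window th (in_window th Hth)) as [_ [_ [Hgam _]]]. lra. }
  intros th Hth. apply solution_eq_gamma_near; auto.
  pose proof (Hsmall th Hth). lra.
Qed.

Lemma gamma_is_derive th : - eps < th < eps ->
  is_derive gamma th
    (vnorm t1 / vnorm t4 *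
     (triple (t2d t1 t2 (gamma th)) (t3d t3 t4 th) t4 /
      triple t1 (t2d t1 t2 (gamma th)) (t3d t3 t4 th))).
Proof.
  intros Hth.
  pose proof (vnorm_neq0_triple _ _ _ H123) as N1. pose proof (vnorm_neq0_triple _ _ _ H412) as N4.
  assert (Hex : ex_derive gamma th)
    by apply (cauchy_bounded_ex_derive_n _ _ 1), cauchy_bounded_gamma_window, Hth.
  assert (Hzero : is_derive (fun t => f_comp t1 t2 t3 t4 (gamma t) t) th 0).
  { apply (is_derive_ext_loc (fun _ => 0)); [|apply (is_derive_const 0 th)].
    apply (open_locally (rball 0 eps)); [apply open_rball | unfold rball; rewrite Rminus_0_r; apply in_window, Hth |].
    intros t Ht. symmetry. apply f_comp_gamma_window.
    unfold rball in Ht. rewrite Rminus_0_r in Ht. apply Rabs_def2 in Ht. lra. }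
  pose proof (is_derive_unique _ _ _ (is_derive_f_comp_along t1 t2 t3 t4 gamma th N1 N4 Hex)) as Hd.
  rewrite (is_derive_unique _ _ _ Hzero) in Hd.
  destruct (window th (in_window th Hth)) as [_ [[M1 _] _]].
  assert (HT1 : triple t1 (t2d t1 t2 (gamma th)) (t3d t3 t4 th) <> 0)
    by (intro Hc; unfold f_mv1 in M1; rewrite Hc in M1; lra).
  replace (vnorm t1 / vnorm t4 * _) with (Derive gamma th); [apply Derive_correct, Hex|].
  set (T1 := triple t1 (t2d t1 t2 (gamma th)) (t3d t3 t4 th)) in *.
  set (T2 := triple (t2d t1 t2 (gamma th)) (t3d t3 t4 th) t4) in *.
  apply (Rmult_eq_reg_l (T1 / vnorm t1)).
  - replace (T1 / vnorm t1 * Derive gamma th) with (T2 / vnorm t4) by lra. field. auto.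
  - unfold Rdiv. apply Rmult_integral_contrapositive_currified; auto. now apply Rinv_neq_0_compat.
Qed.

Lemma gamma_analytic : analytic_on gamma (- eps) eps.
Proof. intros th Hth. apply cauchy_bounded_is_pseries, cauchy_bounded_gamma_window, Hth. Qed.

End Window.
End Solution.

Theorem lemmaA1 (t1 t2 t3 t4 : vec3) :
  triple t1 t2 t3 <> 0 -> triple t2 t3 t4 <> 0 ->
  triple t3 t4 t1 <> 0 -> triple t4 t1 t2 <> 0 ->
  exists (thm thp : R), thm < 0 < thp /\
  exists gamma : R -> R,
    C1_on gamma thm thp /\ gamma 0 = 0 /\
    (forall th, thm < th < thp ->
       f_comp t1 t2 t3 t4 (gamma th) th = 0 /\
       f_mv_pos t1 t2 t3 t4 (gamma th) th) /\
    (forall g : R -> R,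
       C1_on g thm thp -> g 0 = 0 ->
       (forall th, thm < th < thp ->
          f_comp t1 t2 t3 t4 (g th) th = 0 /\
          f_mv_pos t1 t2 t3 t4 (g th) th) ->
       forall th, thm < th < thp -> g th = gamma th) /\
    analytic_on gamma thm thp /\
    (forall th, thm < th < thp ->
       is_derive gamma th
         (vnorm t1 / vnorm t4 *
          (triple (t2d t1 t2 (gamma th)) (t3d t3 t4 th) t4 /
           triple t1 (t2d t1 t2 (gamma th)) (t3d t3 t4 th)))).
Proof.
  intros H123 H234 H341 H412.
  destruct (solution_window_exists t1 t2 t3 t4 H123 H234 H341 H412) as [eps [Heps Hwin]].
  exists (- eps), eps. split; [lra|].
  exists (gamma_sol t1 t2 t3 t4).
  split; [exact (gamma_C1 _ _ _ _ eps Hwin)|].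
  split; [apply gamma_sol_0|].
  split.
  { intros th Hth. split; [exact (f_comp_gamma_window _ _ _ _ eps Hwin th Hth)|].
    apply (Hwin th (in_window eps th Hth)). }
  split.
  { intros g Hg Hg0 Hsol. apply (solution_unique _ _ _ _ H123 eps Heps Hwin g Hg Hg0).
    intros th Hth. apply Hsol, Hth. }
  split; [exact (gamma_analytic _ _ _ _ eps Hwin)|].
  exact (gamma_is_derive _ _ _ _ H123 H412 eps Hwin).
Qed.
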